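(* Let $\lambda\ge 0$ and let $\varphi(z)=1+B_1z+B_2z^2+B_3z^3+\cdots$ be analytic in $\mathbb{D}$ with $B_1>0$ and $B_2\in\mathbb{R}$. Let $f(z)=z+\sum_{n\ge2}a_nz^n$ belong to $\sigma$, with inverse $F=f^{-1}$ on $\mathbb{D}$, and suppose \[(1-\lambda)\frac{f(z)}{z}+\lambda f'(z)\prec\varphi(z)\quad\text{and}\quad (1-\lambda)\frac{F(w)}{w}+\lambda F'(w)\prec\varphi(w).\] (That is, $f\in\mathcal{R}_\sigma(\lambda,\varphi)$.) Then \[|a_2|\le\sqrt{\frac{B_1+|B_1-B_2|}{1+2\lambda}}.\]
   Context: $\mathbb{D}=\{z\in\mathbb{C}:|z|<1\}$. $\mathcal{A}$ denotes the class of analytic functions $f$ on $\mathbb{D}$ with $f(0)=0$, $f'(0)=1$, i.e. $f(z)=z+\sum_{n\ge2}a_nz^n$. The class $\sigma$ of bi-univalent functions consists of those $f\in\mathcal{A}$ that are univalent in $\mathbb{D}$ and whose inverse $f^{-1}$ (defined near $0$) extends to a univalent analytic function $F$ on $\mathbb{D}$; then $F(w)=w-a_2w^2+(2a_2^2-a_3)w^3+\cdots$. For analytic $g,h$ on $\mathbb{D}$, $g\prec h$ (subordination) means there is an analytic $\omega:\mathbb{D}\to\mathbb{D}$ with $\omega(0)=0$ and $g=h\circ\omega$ (equivalently $|\omega(z)|\le|z|$). *)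

From Stdlib Require Import Reals.
Open Scope R_scope.

Definition Cx : Type := (R * R)%type.
Definition RtoC (x : R) : Cx := (x, 0).
Definition Cx0 : Cx := (0, 0).
Definition Cx1 : Cx := (1, 0).
Definition Cadd (z w : Cx) : Cx := (fst z + fst w, snd z + snd w).
Definition Copp (z : Cx) : Cx := (- fst z, - snd z).
Definition Csub (z w : Cx) : Cx := Cadd z (Copp w).
Definition Cmul (z w : Cx) : Cx :=
  (fst z * fst w - snd z * snd w, fst z * snd w + snd z * fst w).
Definition Cinv (z : Cx) : Cx :=
  (fst z / (fst z ^ 2 + snd z ^ 2), - snd z / (fst z ^ 2 + snd z ^ 2)).
Definition Cdiv (z w : Cx) : Cx := Cmul z (Cinv w).
Fixpoint Cpow (z : Cx) (n : nat) : Cx :=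
  match n with O => Cx1 | S m => Cmul z (Cpow z m) end.
Definition Cmod (z : Cx) : R := sqrt (fst z ^ 2 + snd z ^ 2).

Definition Ceq_dec (z w : Cx) : {z = w} + {z <> w}.
Proof.
  destruct z as [x y], w as [u v].
  destruct (Req_dec_T x u) as [H1|H1]; [destruct (Req_dec_T y v) as [H2|H2]|].
  - left; subst; reflexivity.
  - right; intro H; inversion H; contradiction.
  - right; intro H; inversion H; contradiction.
Defined.

Fixpoint Cpartial (a : nat -> Cx) (z : Cx) (N : nat) : Cx :=
  match N with
  | O => Cmul (a O) (Cpow z O)
  | S n => Cadd (Cpartial a z n) (Cmul (a (S n)) (Cpow z (S n)))
  end.

Definition ps_sum (a : nat -> Cx) (z s : Cx) : Prop :=
  Un_cv (fun N => fst (Cpartial a z N)) (fst s) /\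
  Un_cv (fun N => snd (Cpartial a z N)) (snd s).

Definition ps_on_disk (a : nat -> Cx) (f : Cx -> Cx) : Prop :=
  forall z, Cmod z < 1 -> ps_sum a z (f z).

Definition analytic_on_disk (f : Cx -> Cx) : Prop := exists a, ps_on_disk a f.

Definition C_deriv_at (f : Cx -> Cx) (z l : Cx) : Prop :=
  forall eps, eps > 0 -> exists delta, delta > 0 /\
    forall h, h <> Cx0 -> Cmod h < delta ->
      Cmod (Csub (Cdiv (Csub (f (Cadd z h)) (f z)) h) l) < eps.

Definition univalent_on_disk (f : Cx -> Cx) : Prop :=
  analytic_on_disk f /\
  forall z w, Cmod z < 1 -> Cmod w < 1 -> f z = f w -> z = w.

Definition subordinate (g h : Cx -> Cx) : Prop :=
  exists om : Cx -> Cx, analytic_on_disk om /\ om Cx0 = Cx0 /\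
    (forall z, Cmod z < 1 -> Cmod (om z) < 1) /\
    (forall z, Cmod z < 1 -> g z = h (om z)).

(* f(z)/z, extended analytically at 0 by f'(0) *)
Definition divz (f f' : Cx -> Cx) (z : Cx) : Cx :=
  if Ceq_dec z Cx0 then f' Cx0 else Cdiv (f z) z.

Definition Rlam_op (lam : R) (f f' : Cx -> Cx) (z : Cx) : Cx :=
  Cadd (Cmul (RtoC (1 - lam)) (divz f f' z)) (Cmul (RtoC lam) (f' z)).

Definition in_class_A (a : nat -> Cx) (f : Cx -> Cx) : Prop :=
  ps_on_disk a f /\ a O = Cx0 /\ a 1%nat = Cx1.

(* f in sigma, and F is the univalent extension to D of f^{-1} *)
Definition bi_univalent_with_inverse (a : nat -> Cx) (f F : Cx -> Cx) : Prop :=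
  in_class_A a f /\ univalent_on_disk f /\ univalent_on_disk F /\
  exists r, r > 0 /\ forall w, Cmod w < r -> Cmod (F w) < 1 /\ f (F w) = w.

(** Let [om(z) = c_1 z + c_2 z^2 + ...] and [nu(w) = d_1 w + d_2 w^2 + ...]
    be the Schwarz functions of the two subordinations.  The inverse [F = f^{-1}] has
    coefficients [1, -a_2, 2 a_2^2 - a_3], so comparing coefficients of order 1 and 2 gives
      [(1+lam) a_2 = B_1 c_1],     [(1+2lam) a_3 = B_1 c_2 + B_2 c_1^2],
      [-(1+lam) a_2 = B_1 d_1],    [(1+2lam)(2 a_2^2 - a_3) = B_1 d_2 + B_2 d_1^2].
    Hence [d_1 = -c_1] and [2(1+2lam) a_2^2 = B_1 (c_2 + d_2) + 2 B_2 c_1^2].  The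
    classical inequality [|c_2| <= 1 - |c_1|^2] (and likewise for [d]) then yields
      [(1+2lam) |a_2|^2 <= B_1 + (|B_2| - B_1) |c_1|^2 <= B_1 + |B_1 - B_2|]. *)

From Pilot Require Import Defs.
From Stdlib Require Import Reals Lra Lia.
From Coquelicot Require Import Coquelicot.
Open Scope R_scope.

Ltac ceq := match goal with |- @eq _ ?x ?y => change (@eq C x y) end.
Ltac cring := ceq; ring.

(** The complex numbers of [Defs] are pairs of reals, exactly as Coquelicot's
    [C]; the following conversions let us use Coquelicot's field [C] and its
    lemmas on [Cmod]. *)
Lemma Cadd_C (x y : Cx) : Cadd x y = (x + y)%C. Proof. reflexivity. Qed.
Lemma Cmul_C (x y : Cx) : Cmul x y = (x * y)%C. Proof. reflexivity. Qed.
Lemma Cdiv_C (x y : Cx) : Defs.Cdiv x y = (x / y)%C. Proof. reflexivity. Qed.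
Lemma Cmod_C (x : Cx) : Defs.Cmod x = Cmod x. Proof. reflexivity. Qed.
Lemma Cx1_C : Cx1 = RtoC 1. Proof. reflexivity. Qed.
Lemma Cx0_C : Cx0 = RtoC 0. Proof. reflexivity. Qed.
Lemma Cpow_C (x : Cx) n : Defs.Cpow x n = (x ^ n)%C.
Proof. induction n as [|n IH]; simpl; [reflexivity | now rewrite IH]. Qed.

Lemma Cpartial_0 (e : nat -> C) (z : C) : Cpartial e z 0 = e 0%nat.
Proof. change (@eq C (Cmul (e 0%nat) Cx1) (e 0%nat)). rewrite Cmul_C, Cx1_C. ring. Qed.

Lemma Cpartial_S (e : nat -> C) (z : C) n :
  Cpartial e z (S n) = (Cpartial e z n + e (S n) * z ^ (S n))%C.
Proof. simpl Cpartial. now rewrite Cadd_C, Cmul_C, Cpow_C. Qed.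

Lemma Cpartial_2 (e : nat -> C) (z : C) :
  Cpartial e z 2 = (e 0%nat + e 1%nat * z + e 2%nat * z ^ 2)%C.
Proof. rewrite !Cpartial_S, Cpartial_0. cring. Qed.

Lemma Cpartial_3 (e : nat -> C) (z : C) :
  Cpartial e z 3 = (e 0%nat + e 1%nat * z + e 2%nat * z ^ 2 + e 3%nat * z ^ 3)%C.
Proof. rewrite !Cpartial_S, Cpartial_0. cring. Qed.

(** * Convergent power series *)

Lemma Cmod_le_abs (x y : R) : Cmod (x, y) <= Rabs x + Rabs y.
Proof.
  pose proof (Rabs_pos x); pose proof (Rabs_pos y).
  unfold Cmod; simpl. apply Rsqr_incr_0_var; [|lra].
  rewrite Rsqr_sqrt by nra. unfold Rsqr.
  replace (x * (x * 1) + y * (y * 1)) with (Rabs x * Rabs x + Rabs y * Rabs y); [nra|].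
  rewrite <- !Rabs_mult, !Rabs_right by nra. ring.
Qed.

Lemma Cmod_sub_le_abs (s t : C) :
  Cmod (s - t)%C <= Rabs (fst s - fst t) + Rabs (snd s - snd t).
Proof.
  destruct s as [s1 s2], t as [t1 t2].
  replace ((s1, s2) - (t1, t2))%C with ((s1 - t1), (s2 - t2))%R
    by (unfold Cminus, Cplus, Copp; simpl; f_equal; ring).
  apply Cmod_le_abs.
Qed.

Lemma cv_Cmod_le (s : nat -> C) (l c : C) (b : R) (N0 : nat) :
  Un_cv (fun N => fst (s N)) (fst l) -> Un_cv (fun N => snd (s N)) (snd l) ->
  (forall N, (N0 <= N)%nat -> Cmod (s N - c)%C <= b) -> Cmod (l - c)%C <= b.
Proof.
  intros H1 H2 Hb. apply Rnot_lt_le. intros Hlt.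
  set (eps := (Cmod (l - c)%C - b) / 2).
  assert (Heps : eps > 0) by (unfold eps; lra).
  destruct (H1 eps Heps) as [N1 HN1], (H2 eps Heps) as [N2 HN2].
  set (N := (N0 + N1 + N2)%nat).
  specialize (HN1 N ltac:(unfold N; lia)). specialize (HN2 N ltac:(unfold N; lia)).
  specialize (Hb N ltac:(unfold N; lia)). unfold R_dist in *.
  assert (Cmod (l - c)%C <= Cmod (s N - l)%C + Cmod (s N - c)%C).
  { replace (l - c)%C with (- (s N - l) + (s N - c))%C by ring.
    eapply Rle_trans; [apply Cmod_triangle|]. rewrite Cmod_opp. lra. }
  pose proof (Cmod_sub_le_abs (s N) l). unfold eps in *. lra.
Qed.

Lemma ps_sum_unique (a : nat -> C) (z s1 s2 : C) :
  ps_sum a z s1 -> ps_sum a z s2 -> s1 = s2.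
Proof.
  intros [h1 h2] [k1 k2]. destruct s1, s2; simpl in *.
  f_equal; eapply UL_sequence; eauto.
Qed.

Lemma ps_at0 (e : nat -> C) (g : C -> C) : ps_on_disk e g -> g 0%C = e 0%nat.
Proof.
  intros H. assert (Hz : Cmod 0%C < 1) by (rewrite Cmod_0; lra).
  eapply ps_sum_unique; [exact (H _ Hz)|].
  assert (HP : forall N, Cpartial e (RtoC 0) N = e 0%nat).
  { induction N as [|N IH]; [apply Cpartial_0|]. rewrite Cpartial_S, IH. simpl. cring. }
  split; simpl; intros eps Heps; exists 0%nat; intros;
    rewrite HP; unfold R_dist; rewrite Rminus_diag, Rabs_R0; lra.
Qed.

Lemma cv_bounded (u : nat -> R) l : Un_cv u l -> exists M, forall n, Rabs (u n) <= M.
Proof.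
  intros H. destruct (H 1 ltac:(lra)) as [N HN].
  assert (Hpre : forall K, exists M, forall n, (n < K)%nat -> Rabs (u n) <= M).
  { induction K as [|K [M HM]]; [exists 0; intros; lia|].
    exists (Rmax M (Rabs (u K))). intros n Hn.
    destruct (Nat.eq_dec n K); [subst; apply Rmax_r|].
    eapply Rle_trans; [apply HM; lia | apply Rmax_l]. }
  destruct (Hpre N) as [M HM].
  exists (Rmax M (Rabs l + 1)). intros n. destruct (Compare_dec.le_lt_dec N n).
  - specialize (HN n ltac:(lia)). unfold R_dist in HN.
    pose proof (Rabs_triang_inv (u n) l).
    eapply Rle_trans; [|apply Rmax_r]. lra.
  - eapply Rle_trans; [apply HM; lia | apply Rmax_l].
Qed.

Lemma ps_partial_bounded (e : nat -> C) (z s : C) :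
  ps_sum e z s -> exists M, forall N, Cmod (Cpartial e z N) <= M.
Proof.
  intros [H1 H2].
  destruct (cv_bounded _ _ H1) as [M1 HM1], (cv_bounded _ _ H2) as [M2 HM2].
  exists (M1 + M2). intros N.
  destruct (Cpartial e z N) as [x y] eqn:E.
  pose proof (HM1 N); pose proof (HM2 N). rewrite E in *; simpl in *.
  pose proof (Cmod_le_abs x y). lra.
Qed.

Lemma coef_bound (e : nat -> C) (g : C -> C) s : ps_on_disk e g -> 0 <= s < 1 ->
  exists M, 0 <= M /\ forall n, Cmod (e n) * s ^ n <= M.
Proof.
  intros H Hs. assert (Hz : Cmod (RtoC s) < 1) by (rewrite Cmod_R, Rabs_right; lra).
  destruct (ps_partial_bounded _ _ _ (H _ Hz)) as [M HM].
  pose proof (Cmod_ge_0 (Cpartial e (RtoC s) 0)). pose proof (HM 0%nat).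
  exists (2 * M). split; [lra|]. intros n.
  replace (Cmod (e n) * s ^ n) with (Cmod (e n * RtoC s ^ n)%C)
    by (rewrite Cmod_mult, Cmod_pow, Cmod_R, Rabs_right; lra).
  destruct n as [|n].
  - rewrite <- (Cpartial_0 e s). simpl (RtoC s ^ 0)%C. rewrite Cmult_1_r. lra.
  - replace (e (S n) * RtoC s ^ S n)%C
      with (Cpartial e (RtoC s) (S n) + - Cpartial e (RtoC s) n)%C
      by (rewrite Cpartial_S; cring).
    eapply Rle_trans; [apply Cmod_triangle|]. rewrite Cmod_opp.
    pose proof (HM (S n)); pose proof (HM n). lra.
Qed.

Lemma partial_diff_bound (e : nat -> C) (z : C) s q M K : 0 < s -> 0 <= q < 1 ->
  Cmod z <= q * s -> (forall n, Cmod (e n) * s ^ n <= M) -> 0 <= M ->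
  forall d, Cmod (Cpartial e z (K + d) - Cpartial e z K)%C <=
            M * (q ^ (S K) - q ^ (S (K + d))) * / (1 - q).
Proof.
  intros Hs Hq Hz HM HM0 d. induction d as [|d IH].
  - rewrite Nat.add_0_r. replace (Cpartial e z K - Cpartial e z K)%C with (RtoC 0) by ring.
    rewrite Cmod_0, Rminus_diag, Rmult_0_r, Rmult_0_l. lra.
  - replace (K + S d)%nat with (S (K + d)) by lia. rewrite Cpartial_S.
    set (N := (K + d)%nat) in *.
    replace (Cpartial e z N + e (S N) * z ^ S N - Cpartial e z K)%C with
      ((Cpartial e z N - Cpartial e z K) + e (S N) * z ^ S N)%C by ring.
    eapply Rle_trans; [apply Cmod_triangle|].
    assert (Hterm : Cmod (e (S N) * z ^ S N)%C <= M * q ^ S N).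
    { rewrite Cmod_mult, Cmod_pow.
      assert (Cmod z ^ S N <= (q * s) ^ S N) by (apply pow_incr; split; [apply Cmod_ge_0|exact Hz]).
      rewrite Rpow_mult_distr in H.
      pose proof (HM (S N)). pose proof (Cmod_ge_0 (e (S N))).
      pose proof (pow_le q (S N) ltac:(lra)). pose proof (pow_le s (S N) ltac:(lra)).
      nra. }
    assert (M * (q ^ S K - q ^ S N) * / (1 - q) + M * q ^ S N =
            M * (q ^ S K - q ^ S (S N)) * / (1 - q))
      by (change (q ^ S (S N)) with (q * q ^ S N); field; lra).
    lra.
Qed.

Lemma tail_bound (e : nat -> C) (g : C -> C) (z : C) s q M K :
  ps_on_disk e g -> Cmod z < 1 -> 0 < s -> 0 <= q < 1 ->
  Cmod z <= q * s -> (forall n, Cmod (e n) * s ^ n <= M) -> 0 <= M ->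
  Cmod (g z - Cpartial e z K)%C <= M * q ^ (S K) * / (1 - q).
Proof.
  intros Hps Hz1 Hs Hq Hz HM HM0. destruct (Hps z Hz1) as [H1 H2].
  apply (cv_Cmod_le (fun N => Cpartial e z N) (g z) (Cpartial e z K) _ K H1 H2).
  intros N HN. replace N with (K + (N - K))%nat by lia.
  eapply Rle_trans; [apply (partial_diff_bound e z s q M K); auto|].
  assert (0 < / (1 - q)) by (apply Rinv_0_lt_compat; lra).
  pose proof (pow_le q (S (K + (N - K))) ltac:(lra)).
  apply Rmult_le_compat_r; nra.
Qed.

(** * Estimates of order [|z|^k] at the origin *)

Definition bigO (k : nat) (h : C -> C) : Prop :=
  exists d K, 0 < d /\ 0 <= K /\ forall z : C, Cmod z < d -> Cmod (h z) <= K * Cmod z ^ k.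

Lemma bigO_ext k (h1 h2 : C -> C) d0 : 0 < d0 -> (forall z, Cmod z < d0 -> h1 z = h2 z) ->
  bigO k h1 -> bigO k h2.
Proof.
  intros Hd0 He [d [K [Hd [HK H]]]]. exists (Rmin d d0), K.
  split; [apply Rmin_pos; lra|]. split; [exact HK|]. intros z Hz.
  rewrite <- He by (eapply Rlt_le_trans; [exact Hz|apply Rmin_r]).
  apply H. eapply Rlt_le_trans; [exact Hz|apply Rmin_l].
Qed.

Lemma bigO_add k (h1 h2 : C -> C) : bigO k h1 -> bigO k h2 -> bigO k (fun z => h1 z + h2 z)%C.
Proof.
  intros [d1 [K1 [Hd1 [HK1 H1]]]] [d2 [K2 [Hd2 [HK2 H2]]]].
  exists (Rmin d1 d2), (K1 + K2). split; [apply Rmin_pos; lra|]. split; [lra|].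
  intros z Hz. eapply Rle_trans; [apply Cmod_triangle|].
  pose proof (H1 z ltac:(eapply Rlt_le_trans; [exact Hz|apply Rmin_l])).
  pose proof (H2 z ltac:(eapply Rlt_le_trans; [exact Hz|apply Rmin_r])). lra.
Qed.

Lemma bigO_scal k (c : C) (h : C -> C) : bigO k h -> bigO k (fun z => c * h z)%C.
Proof.
  intros [d [K [Hd [HK H]]]]. exists d, (Cmod c * K). split; [exact Hd|]. split.
  - apply Rmult_le_pos; [apply Cmod_ge_0|exact HK].
  - intros z Hz. rewrite Cmod_mult, Rmult_assoc.
    apply Rmult_le_compat_l; [apply Cmod_ge_0|auto].
Qed.

Lemma bigO_sub k (h1 h2 : C -> C) : bigO k h1 -> bigO k h2 -> bigO k (fun z => h1 z - h2 z)%C.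
Proof.
  intros H1 H2. apply bigO_add; [exact H1|].
  apply (bigO_ext k (fun z => (- 1) * h2 z)%C _ 1); [lra| intros; ring | now apply bigO_scal].
Qed.

Lemma bigO_mul j k (h1 h2 : C -> C) :
  bigO j h1 -> bigO k h2 -> bigO (j + k) (fun z => h1 z * h2 z)%C.
Proof.
  intros [d1 [K1 [Hd1 [HK1 H1]]]] [d2 [K2 [Hd2 [HK2 H2]]]].
  exists (Rmin d1 d2), (K1 * K2). split; [apply Rmin_pos; lra|]. split; [nra|].
  intros z Hz. rewrite Cmod_mult, pow_add.
  pose proof (H1 z ltac:(eapply Rlt_le_trans; [exact Hz|apply Rmin_l])).
  pose proof (H2 z ltac:(eapply Rlt_le_trans; [exact Hz|apply Rmin_r])).
  replace (K1 * K2 * (Cmod z ^ j * Cmod z ^ k))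
    with ((K1 * Cmod z ^ j) * (K2 * Cmod z ^ k)) by ring.
  apply Rmult_le_compat; auto; apply Cmod_ge_0.
Qed.

Lemma bigO_weak j k (h : C -> C) : (j <= k)%nat -> bigO k h -> bigO j h.
Proof.
  intros Hjk [d [K [Hd [HK H]]]]. exists (Rmin d 1), K.
  split; [apply Rmin_pos; lra|]. split; [exact HK|]. intros z Hz.
  assert (Hz1 : Cmod z <= 1) by (left; eapply Rlt_le_trans; [exact Hz|apply Rmin_r]).
  eapply Rle_trans; [apply H; eapply Rlt_le_trans; [exact Hz|apply Rmin_l]|].
  apply Rmult_le_compat_l; [exact HK|].
  replace k with (j + (k - j))%nat by lia. rewrite pow_add.
  pose proof (pow_le (Cmod z) j (Cmod_ge_0 z)).
  assert (Cmod z ^ (k - j) <= 1)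
    by (rewrite <- (pow1 (k - j)); apply pow_incr; split; [apply Cmod_ge_0|exact Hz1]).
  nra.
Qed.

Lemma bigO_zpow k : bigO k (fun z => z ^ k)%C.
Proof. exists 1, 1. split; [lra|]. split; [lra|]. intros. rewrite Cmod_pow. lra. Qed.

Lemma bigO_const (c : C) : bigO 0 (fun _ => c).
Proof. exists 1, (Cmod c). split; [lra|]. split; [apply Cmod_ge_0|]. intros. simpl. lra. Qed.

Lemma bigO_id0 : bigO 0 (fun z => z).
Proof.
  apply (bigO_weak 0 1); [lia|].
  apply (bigO_ext 1 (fun z => z ^ 1)%C _ 1); [lra | intros; simpl; ring | apply bigO_zpow].
Qed.

Lemma bigO_cpow0 (h : C -> C) n : bigO 0 h -> bigO 0 (fun z => h z ^ n)%C.
Proof.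
  intros H. induction n as [|n IH]; [exact (bigO_const 1%C)|].
  apply (bigO_ext 0 (fun z => h z * h z ^ n)%C _ 1); [lra | intros; reflexivity |].
  apply (bigO_mul 0 0); auto.
Qed.

Ltac bounded0 := repeat first [ apply (bigO_add 0) | apply (bigO_sub 0) | apply (bigO_mul 0 0)
  | apply bigO_cpow0 | apply bigO_const | apply bigO_id0 | assumption ].

Lemma bigO_comp k (g h : C -> C) : bigO k g -> bigO 1 h -> bigO k (fun z => g (h z)).
Proof.
  intros [d1 [K1 [Hd1 [HK1 H1]]]] [d2 [K2 [Hd2 [HK2 H2]]]].
  exists (Rmin d2 (d1 / (K2 + 1))), (K1 * K2 ^ k). split.
  { apply Rmin_pos; [exact Hd2|]. apply Rdiv_lt_0_compat; lra. }
  split; [apply Rmult_le_pos; [exact HK1|apply pow_le; exact HK2]|].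
  intros z Hz. pose proof (Cmod_ge_0 z).
  pose proof (H2 z ltac:(eapply Rlt_le_trans; [exact Hz|apply Rmin_l])) as Hh.
  rewrite pow_1 in Hh.
  assert (Hz2 : Cmod z * (K2 + 1) < d1).
  { assert (Cmod z < d1 / (K2 + 1)) by (eapply Rlt_le_trans; [exact Hz|apply Rmin_r]).
    apply (Rmult_lt_compat_r (K2 + 1)) in H0; [|lra].
    unfold Rdiv in H0. rewrite Rmult_assoc, Rinv_l, Rmult_1_r in H0 by lra. exact H0. }
  eapply Rle_trans; [apply H1; nra|].
  rewrite Rmult_assoc. apply Rmult_le_compat_l; [exact HK1|].
  rewrite <- Rpow_mult_distr. apply pow_incr. split; [apply Cmod_ge_0|exact Hh].
Qed.

Lemma bigO_ps (e : nat -> C) (g : C -> C) K : ps_on_disk e g ->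
  bigO (S K) (fun z => g z - Cpartial e z K)%C.
Proof.
  intros H. destruct (coef_bound e g (1/2) H ltac:(lra)) as [M [HM0 HM]].
  exists (1/4), (2 * M * 2 ^ S K). split; [lra|]. split.
  { apply Rmult_le_pos; [lra|]. apply pow_le; lra. }
  intros z Hz. pose proof (Cmod_ge_0 z).
  eapply Rle_trans.
  { apply (tail_bound e g z (1/2) (2 * Cmod z) M K H); auto; lra. }
  rewrite Rpow_mult_distr.
  assert (0 <= Cmod z ^ S K) by (apply pow_le, Cmod_ge_0).
  assert (0 < 2 ^ S K) by (apply pow_lt; lra).
  assert (/ (1 - 2 * Cmod z) <= 2).
  { replace 2 with (/ (1/2)) at 2 by field. apply Rinv_le_contravar; lra. }
  replace (2 * M * 2 ^ S K * Cmod z ^ S K) with (M * (2 ^ S K * Cmod z ^ S K) * 2) by ring.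
  apply Rmult_le_compat_l; [apply Rmult_le_pos; nra | exact H3].
Qed.

Lemma ps_bigO1 (e : nat -> C) (g : C -> C) : ps_on_disk e g -> e 0%nat = RtoC 0 -> bigO 1 g.
Proof.
  intros H He0.
  apply (bigO_ext 1 (fun z => (g z - Cpartial e z 1) + e 1%nat * z ^ 1)%C _ 1); [lra| |].
  - intros z _. rewrite Cpartial_S, Cpartial_0, He0. cring.
  - apply bigO_add; [apply (bigO_weak 1 2); [lia | exact (bigO_ps e g 1 H)]|].
    apply bigO_scal, bigO_zpow.
Qed.

(** * Uniqueness of Taylor coefficients *)

Lemma small_zero (x : C) d K : 0 < d -> (forall t, 0 < t < d -> Cmod x <= K * t) -> x = RtoC 0.
Proof.
  intros Hd H. destruct (Ceq_dec x (RtoC 0)) as [E|E]; [exact E|]. exfalso.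
  assert (Hx : 0 < Cmod x) by (apply Cmod_gt_0; exact E).
  set (K' := Rabs K + 1). assert (HK' : 0 < K') by (unfold K'; pose proof (Rabs_pos K); lra).
  set (t := Rmin (d / 2) (Cmod x / (2 * K'))).
  assert (Ht : 0 < t) by (unfold t; apply Rmin_pos; apply Rdiv_lt_0_compat; lra).
  assert (Ht1 : t < d) by (unfold t; eapply Rle_lt_trans; [apply Rmin_l|lra]).
  assert (Ht2 : K' * t <= Cmod x / 2).
  { assert (t <= Cmod x / (2 * K')) by (unfold t; apply Rmin_r).
    apply (Rmult_le_compat_l K') in H0; [|lra].
    replace (K' * (Cmod x / (2 * K'))) with (Cmod x / 2) in H0 by (field; lra). exact H0. }
  specialize (H t ltac:(lra)).
  assert (K * t <= K' * t) by (unfold K'; pose proof (Rle_abs K); nra).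
  lra.
Qed.

Lemma peel (p : C) (q : R -> C) n K d Q : 0 < d -> d <= 1 -> 0 <= K ->
  (forall t, 0 < t < d -> Cmod (p + t * q t)%C <= K * t ^ S n) ->
  (forall t, 0 < t < d -> Cmod (q t) <= Q) ->
  p = RtoC 0 /\ forall t, 0 < t < d -> Cmod (q t) <= K * t ^ n.
Proof.
  intros Hd Hd1 HK H HQ.
  assert (Hp : p = RtoC 0).
  { apply (small_zero p d (K + Q)); [exact Hd|]. intros t Ht.
    specialize (H t Ht). specialize (HQ t Ht).
    assert (Cmod p <= Cmod (p + t * q t)%C + Cmod (t * q t)%C).
    { replace p with ((p + t * q t) + - (t * q t))%C at 1 by ring.
      eapply Rle_trans; [apply Cmod_triangle|]. rewrite Cmod_opp. lra. }
    rewrite Cmod_mult, Cmod_R, Rabs_right in H0 by lra.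
    assert (t ^ S n <= t).
    { change (t ^ S n) with (t * t ^ n).
      assert (t ^ n <= 1) by (rewrite <- (pow1 n); apply pow_incr; lra). nra. }
    nra. }
  split; [exact Hp|]. intros t Ht. specialize (H t Ht). rewrite Hp in H.
  replace (RtoC 0 + t * q t)%C with (t * q t)%C in H by ring.
  rewrite Cmod_mult, Cmod_R, Rabs_right in H by lra. change (t ^ S n) with (t * t ^ n) in H.
  apply (Rmult_le_reg_l t); [lra|]. nra.
Qed.

Fixpoint sum_Cmod (p : nat -> C) (n : nat) : R :=
  match n with O => Cmod (p 0%nat) | S m => sum_Cmod p m + Cmod (p (S m)) end.

Lemma Cpartial_unit_bound (p : nat -> C) (t : R) n : 0 < t <= 1 ->
  Cmod (Cpartial p (RtoC t) n) <= sum_Cmod p n.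
Proof.
  intros Ht. induction n as [|n IH]; simpl sum_Cmod.
  - rewrite Cpartial_0. lra.
  - rewrite Cpartial_S. eapply Rle_trans; [apply Cmod_triangle|].
    rewrite Cmod_mult, Cmod_pow, Cmod_R, Rabs_right by lra.
    assert (t ^ S n <= 1) by (rewrite <- (pow1 (S n)); apply pow_incr; lra).
    pose proof (Cmod_ge_0 (p (S n))). nra.
Qed.

Lemma Cpartial_unshift (p : nat -> C) (z : C) n :
  Cpartial p z (S n) = (p 0%nat + z * Cpartial (fun k => p (S k)) z n)%C.
Proof.
  induction n as [|n IH].
  - rewrite Cpartial_S, !Cpartial_0. simpl. cring.
  - rewrite Cpartial_S, IH, (Cpartial_S (fun k => p (S k))). simpl. cring.
Qed.

Lemma coef_unique_real n : forall (p : nat -> C) d K, 0 < d <= 1 -> 0 <= K ->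
  (forall t, 0 < t < d -> Cmod (Cpartial p (RtoC t) n) <= K * t ^ S n) ->
  forall k, (k <= n)%nat -> p k = RtoC 0.
Proof.
  induction n as [|n IH]; intros p d K Hd HK H k Hk.
  - replace k with 0%nat by lia. apply (small_zero _ d K); [lra|].
    intros t Ht. specialize (H t Ht). rewrite Cpartial_0, pow_1 in H. exact H.
  - set (q := fun k => p (S k)).
    destruct (peel (p 0%nat) (fun t => Cpartial q (RtoC t) n) (S n) K d (sum_Cmod q n))
      as [Hp0 Hq]; try lra.
    + intros t Ht. rewrite <- Cpartial_unshift. now apply H.
    + intros t Ht. apply Cpartial_unit_bound. lra.
    + destruct k as [|k]; [exact Hp0|]. apply (IH q d K); auto; lia.
Qed.

Lemma coef_unique (p : nat -> C) n : bigO (S n) (fun z => Cpartial p z n) ->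
  forall k, (k <= n)%nat -> p k = RtoC 0.
Proof.
  intros [d [K [Hd [HK H]]]]. apply (coef_unique_real n p (Rmin d 1) K); auto.
  - split; [apply Rmin_pos; lra | apply Rmin_r].
  - intros t Ht. replace (K * t ^ S n) with (K * Cmod (RtoC t) ^ S n)
      by (rewrite Cmod_R, Rabs_right by lra; reflexivity).
    apply H. rewrite Cmod_R, Rabs_right by lra.
    eapply Rlt_le_trans; [apply Ht | apply Rmin_l].
Qed.

Lemma coef_unique2 (p0 p1 p2 : C) : bigO 3 (fun z => p0 + p1 * z + p2 * z ^ 2)%C ->
  p0 = RtoC 0 /\ p1 = RtoC 0 /\ p2 = RtoC 0.
Proof.
  intros H. set (p := fun k => match k with 0 => p0 | 1 => p1 | _ => p2 end%nat).
  assert (Hp : forall k, (k <= 2)%nat -> p k = RtoC 0).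
  { apply coef_unique. refine (bigO_ext _ _ _ 1 ltac:(lra) _ H).
    intros z _. rewrite Cpartial_2. reflexivity. }
  exact (conj (Hp 0%nat ltac:(lia)) (conj (Hp 1%nat ltac:(lia)) (Hp 2%nat ltac:(lia)))).
Qed.

Lemma coef_unique3 (p0 p1 p2 p3 : C) :
  bigO 4 (fun z => p0 + p1 * z + p2 * z ^ 2 + p3 * z ^ 3)%C ->
  p0 = RtoC 0 /\ p1 = RtoC 0 /\ p2 = RtoC 0 /\ p3 = RtoC 0.
Proof.
  intros H. set (p := fun k => match k with 0 => p0 | 1 => p1 | 2 => p2 | _ => p3 end%nat).
  assert (Hp : forall k, (k <= 3)%nat -> p k = RtoC 0).
  { apply coef_unique. refine (bigO_ext _ _ _ 1 ltac:(lra) _ H).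
    intros z _. rewrite Cpartial_3. reflexivity. }
  repeat split; [apply (Hp 0%nat) | apply (Hp 1%nat) | apply (Hp 2%nat) | apply (Hp 3%nat)]; lia.
Qed.

(** * Second-order expansion of the derivative *)

Lemma pow_diff (x y : C) r n : Cmod x <= r -> Cmod y <= r ->
  Cmod (x ^ S n - y ^ S n)%C <= INR (S n) * r ^ n * Cmod (x - y)%C.
Proof.
  intros Hx Hy. assert (Hr : 0 <= r) by (pose proof (Cmod_ge_0 x); lra).
  induction n as [|n IH].
  - simpl. replace (x * 1 - y * 1)%C with (x - y)%C by ring. lra.
  - replace (x ^ S (S n) - y ^ S (S n))%C with (x * (x ^ S n - y ^ S n) + (x - y) * y ^ S n)%C
      by (simpl; ring).
    eapply Rle_trans; [apply Cmod_triangle|]. rewrite !Cmod_mult, Cmod_pow.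
    assert (Cmod y ^ S n <= r ^ S n) by (apply pow_incr; split; auto; apply Cmod_ge_0).
    pose proof (Cmod_ge_0 x). pose proof (Cmod_ge_0 (x - y)%C).
    pose proof (Cmod_ge_0 (x ^ S n - y ^ S n)%C).
    assert (Cmod x * Cmod (x ^ S n - y ^ S n)%C <= r * (INR (S n) * r ^ n * Cmod (x - y)%C))
      by (apply Rmult_le_compat; auto).
    assert (Cmod (x - y)%C * Cmod y ^ S n <= Cmod (x - y)%C * (r * r ^ n))
      by (apply Rmult_le_compat_l; auto).
    rewrite !S_INR in *. simpl pow in *. nra.
Qed.

(** [n <= 2^n], to absorb the factor [n+1] of [pow_diff]. *)
Lemma INR_le_pow2 n : INR n <= 2 ^ n.
Proof.
  induction n as [|n IH]; [simpl; lra|]. rewrite S_INR. simpl.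
  assert (1 <= 2 ^ n) by (apply pow_R1_Rle; lra). lra.
Qed.

(** One term of order [n = 4 + d] on the disc [|z| <= r <= 1/8]: its increment is
    at most [256 M r^3 |x - y| / 2^d], using [|e_n| <= M 2^n] and [n <= 2^n]. *)
Lemma high_term_diff (e : nat -> C) (x y : C) M r d :
  (forall n, Cmod (e n) * (1/2) ^ n <= M) -> 0 <= M ->
  Cmod x <= r -> Cmod y <= r -> r <= 1/8 ->
  Cmod (e (S (3 + d)) * (x ^ S (3 + d) - y ^ S (3 + d)))%C
  <= 256 * M * r ^ 3 * Cmod (x - y)%C * (1/2) ^ d.
Proof.
  intros HM HM0 Hx Hy Hr. assert (Hr0 : 0 <= r) by (pose proof (Cmod_ge_0 x); lra).
  set (n := (3 + d)%nat). rewrite Cmod_mult.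
  pose proof (Cmod_ge_0 (x - y)%C). pose proof (pow_le r 3 Hr0).
  pose proof (pow_diff x y r n Hx Hy) as Hd. pose proof (INR_le_pow2 (S n)).
  assert (He : Cmod (e (S n)) <= M * 2 ^ S n).
  { replace (Cmod (e (S n))) with (Cmod (e (S n)) * (1/2) ^ S n * 2 ^ S n).
    - apply Rmult_le_compat_r; [apply pow_le; lra | apply HM].
    - rewrite Rmult_assoc, <- Rpow_mult_distr. replace (1/2*2) with 1 by field.
      rewrite pow1. ring. }
  eapply Rle_trans with (M * 2 ^ S n * (2 ^ S n * r ^ n * Cmod (x - y)%C)).
  { apply Rmult_le_compat; auto using Cmod_ge_0.
    eapply Rle_trans; [exact Hd|]. apply Rmult_le_compat_r; [apply Cmod_ge_0|].
    apply Rmult_le_compat_r; [apply pow_le; auto | auto]. }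
  replace (M * 2 ^ S n * (2 ^ S n * r ^ n * Cmod (x - y)%C)) with
    ((M * r ^ 3 * Cmod (x - y)%C) * 256 * (2 ^ d * 2 ^ d * r ^ d))
    by (unfold n; rewrite !pow_add; simpl; ring).
  replace (256 * M * r ^ 3 * Cmod (x - y)%C * (1 / 2) ^ d) with
    ((M * r ^ 3 * Cmod (x - y)%C) * 256 * (1/2) ^ d) by ring.
  apply Rmult_le_compat_l.
  - apply Rmult_le_pos; [apply Rmult_le_pos; [apply Rmult_le_pos|]|]; lra.
  - rewrite <- !Rpow_mult_distr. apply pow_incr. split; lra.
Qed.

Lemma tail_diff_partial (e : nat -> C) (x y : C) M r :
  (forall n, Cmod (e n) * (1/2) ^ n <= M) -> 0 <= M ->
  Cmod x <= r -> Cmod y <= r -> r <= 1/8 -> forall d,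
  Cmod ((Cpartial e x (3 + d) - Cpartial e x 3) - (Cpartial e y (3 + d) - Cpartial e y 3))%C <=
  512 * M * r ^ 3 * Cmod (x - y)%C * (1 - (1/2) ^ d).
Proof.
  intros HM HM0 Hx Hy Hr d. induction d as [|d IH].
  - rewrite Nat.add_0_r.
    replace (Cpartial e x 3 - Cpartial e x 3 - (Cpartial e y 3 - Cpartial e y 3))%C
      with (RtoC 0) by cring.
    rewrite Cmod_0. simpl. lra.
  - replace (3 + S d)%nat with (S (3 + d)) by lia.
    rewrite (Cpartial_S e x), (Cpartial_S e y).
    set (n := (3 + d)%nat) in *.
    replace (Cpartial e x n + e (S n) * x ^ S n - Cpartial e x 3 -
             (Cpartial e y n + e (S n) * y ^ S n - Cpartial e y 3))%C
      with ((Cpartial e x n - Cpartial e x 3 - (Cpartial e y n - Cpartial e y 3)) +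
            e (S n) * (x ^ S n - y ^ S n))%C by cring.
    eapply Rle_trans; [apply Cmod_triangle|].
    pose proof (high_term_diff e x y M r d HM HM0 Hx Hy Hr).
    replace (512 * M * r ^ 3 * Cmod (x - y)%C * (1 - (1 / 2) ^ S d)) with
      (512 * M * r ^ 3 * Cmod (x - y)%C * (1 - (1 / 2) ^ d)
       + 256 * M * r ^ 3 * Cmod (x - y)%C * (1/2) ^ d) by (simpl; field).
    unfold n in *. lra.
Qed.

Lemma tail_diff (e : nat -> C) (g : C -> C) (x y : C) M r : ps_on_disk e g ->
  (forall n, Cmod (e n) * (1/2) ^ n <= M) -> 0 <= M ->
  Cmod x <= r -> Cmod y <= r -> r <= 1/8 ->
  Cmod ((g x - Cpartial e x 3) - (g y - Cpartial e y 3))%C <= 512 * M * r ^ 3 * Cmod (x - y)%C.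
Proof.
  intros Hps HM HM0 Hx Hy Hr.
  destruct (Hps x ltac:(rewrite Cmod_C; lra)) as [Hx1 Hx2].
  destruct (Hps y ltac:(rewrite Cmod_C; lra)) as [Hy1 Hy2].
  replace ((g x - Cpartial e x 3) - (g y - Cpartial e y 3))%C with
    ((g x - g y) - (Cpartial e x 3 - Cpartial e y 3))%C by cring.
  apply (cv_Cmod_le (fun N => Cpartial e x N - Cpartial e y N)%C _ _ _ 3).
  - exact (CV_minus _ _ _ _ Hx1 Hy1).
  - exact (CV_minus _ _ _ _ Hx2 Hy2).
  - intros N HN. replace N with (3 + (N - 3))%nat by lia.
    replace (Cpartial e x (3 + (N - 3)) - Cpartial e y (3 + (N - 3))
             - (Cpartial e x 3 - Cpartial e y 3))%C
      with ((Cpartial e x (3 + (N - 3)) - Cpartial e x 3)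
            - (Cpartial e y (3 + (N - 3)) - Cpartial e y 3))%C by cring.
    eapply Rle_trans; [apply (tail_diff_partial e x y M r); auto|].
    pose proof (Cmod_ge_0 (x - y)%C). pose proof (Cmod_ge_0 x).
    pose proof (pow_le r 3 ltac:(lra)). pose proof (pow_le (1/2) (N - 3) ltac:(lra)).
    assert (0 <= 512 * M * r ^ 3 * Cmod (x - y)%C)
      by (apply Rmult_le_pos; [apply Rmult_le_pos; [apply Rmult_le_pos|]|]; lra).
    assert (0 <= 512 * M * r ^ 3 * Cmod (x - y)%C * (1 / 2) ^ (N - 3))
      by (apply Rmult_le_pos; lra).
    rewrite Rmult_minus_distr_l, Rmult_1_r. lra.
Qed.

Definition dpoly (e : nat -> C) (z : C) : C :=
  (e 1%nat + 2 * e 2%nat * z + 3 * e 3%nat * z ^ 2)%C.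

Lemma diff_quotient_estimate (e : nat -> C) (g : C -> C) (z : C) M eta :
  ps_on_disk e g -> (forall n, Cmod (e n) * (1/2) ^ n <= M) -> 0 <= M ->
  Cmod z < 1/16 -> 0 < eta <= 1/16 ->
  Cmod ((g (z + RtoC eta) - g z) / RtoC eta - dpoly e z)%C <=
  eta * (Cmod (e 2%nat) + 4 * Cmod (e 3%nat) + 3584 * M) + 512 * M * Cmod z ^ 3.
Proof.
  intros Hps HM HM0 Hz Heta. pose proof (Cmod_ge_0 z).
  set (h := RtoC eta).
  assert (Hh0 : h <> RtoC 0) by (unfold h; intro HH; injection HH; lra).
  assert (Hhm : Cmod h = eta) by (unfold h; rewrite Cmod_R, Rabs_right; lra).
  set (T := fun x => (g x - Cpartial e x 3)%C).
  assert (Hsplit : ((g (z + h) - g z) / h - dpoly e z)%C =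
     (h * (e 2%nat + 3 * e 3%nat * z + e 3%nat * h) + (T (z + h) - T z) / h)%C)
    by (unfold T, dpoly; rewrite !Cpartial_3; field; exact Hh0).
  rewrite Hsplit. eapply Rle_trans; [apply Cmod_triangle|].
  assert (Hpoly : Cmod (h * (e 2%nat + 3 * e 3%nat * z + e 3%nat * h))%C
                  <= eta * (Cmod (e 2%nat) + 4 * Cmod (e 3%nat))).
  { rewrite Cmod_mult, Hhm. apply Rmult_le_compat_l; [lra|].
    eapply Rle_trans; [apply Cmod_triangle|].
    eapply Rle_trans; [apply Rplus_le_compat_r; apply Cmod_triangle|].
    rewrite !Cmod_mult, Hhm, Cmod_R, Rabs_right by lra.
    pose proof (Cmod_ge_0 (e 3%nat)). nra. }
  assert (Htail : Cmod ((T (z + h) - T z) / h)%C <= 512 * M * (Cmod z + eta) ^ 3).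
  { rewrite Cmod_div by exact Hh0. rewrite Hhm. unfold Rdiv.
    apply (Rmult_le_reg_r eta); [lra|]. rewrite Rmult_assoc, Rinv_l, Rmult_1_r by lra.
    unfold T. replace eta with (Cmod (z + h - z)%C) at 2
      by (replace (z + h - z)%C with h by ring; exact Hhm).
    apply tail_diff; auto; try lra.
    rewrite <- Hhm. apply Cmod_triangle. }
  assert (Hcube : (Cmod z + eta) ^ 3 <= Cmod z ^ 3 + 7 * eta).
  { assert (3 * Cmod z ^ 2 + 3 * Cmod z * eta + eta ^ 2 <= 7) by (simpl; nra).
    replace ((Cmod z + eta) ^ 3)
      with (Cmod z ^ 3 + eta * (3 * Cmod z ^ 2 + 3 * Cmod z * eta + eta ^ 2)) by ring.
    nra. }
  nra.
Qed.

Lemma deriv_exp (e : nat -> C) (g g' : C -> C) : ps_on_disk e g ->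
  (forall z, Cmod z < 1 -> C_deriv_at g z (g' z)) ->
  bigO 3 (fun z => g' z - dpoly e z)%C.
Proof.
  intros Hps Hd. destruct (coef_bound e g (1/2) Hps ltac:(lra)) as [M [HM0 HM]].
  exists (1/16), (512 * M). split; [lra|]. split; [lra|].
  intros z Hz. apply le_epsilon. intros ep Hep.
  destruct (Hd z ltac:(lra) (ep / 2) ltac:(lra)) as [del [Hdel Hdq]].
  set (E := Cmod (e 2%nat) + 4 * Cmod (e 3%nat) + 3584 * M).
  assert (HE : 0 <= E)
    by (unfold E; pose proof (Cmod_ge_0 (e 2%nat)); pose proof (Cmod_ge_0 (e 3%nat)); lra).
  set (eta := Rmin (Rmin (del / 2) (1/16)) (ep / (2 * (E + 1)))).
  assert (Heta : 0 < eta).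
  { unfold eta. repeat apply Rmin_pos; try lra. apply Rdiv_lt_0_compat; lra. }
  assert (Heta1 : eta <= del / 2) by (unfold eta; eapply Rle_trans; apply Rmin_l).
  assert (Heta2 : eta <= 1/16) by (unfold eta; eapply Rle_trans; [apply Rmin_l|apply Rmin_r]).
  assert (Heta3 : eta * E <= ep / 2).
  { assert (eta <= ep / (2 * (E + 1))) by (unfold eta; apply Rmin_r).
    apply (Rmult_le_compat_r (E + 1)) in H; [|lra].
    replace (ep / (2 * (E + 1)) * (E + 1)) with (ep / 2) in H by (field; lra). nra. }
  assert (Hh0 : RtoC eta <> Cx0) by (intro HH; injection HH; lra).
  specialize (Hdq (RtoC eta) Hh0 ltac:(rewrite Cmod_C, Cmod_R, Rabs_right; lra)).
  change (Cmod (((g (z + RtoC eta) - g z) / RtoC eta) - g' z)%C < ep / 2) in Hdq.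
  pose proof (diff_quotient_estimate e g z M eta Hps HM HM0 Hz ltac:(lra)) as Hest.
  set (DQ := ((g (z + RtoC eta) - g z) / RtoC eta)%C) in *.
  replace (g' z - dpoly e z)%C with (- (DQ - g' z) + (DQ - dpoly e z))%C by ring.
  eapply Rle_trans; [apply Cmod_triangle|]. rewrite Cmod_opp.
  fold E in Hest. lra.
Qed.

(** * Second-order expansions of the operators in the theorem *)

Lemma divz_0 (g g' : C -> C) : divz g g' Cx0 = g' Cx0.
Proof. unfold divz. case Defs.Ceq_dec; congruence. Qed.

Lemma divz_nz (g g' : C -> C) z : z <> Cx0 -> divz g g' z = Defs.Cdiv (g z) z.
Proof. intros. unfold divz. case Defs.Ceq_dec; congruence. Qed.

Lemma divz_exp (e : nat -> C) (g g' : C -> C) : ps_on_disk e g -> e 0%nat = RtoC 0 ->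
  (forall z, Cmod z < 1 -> C_deriv_at g z (g' z)) ->
  bigO 3 (fun z => divz g g' z - (e 1%nat + e 2%nat * z + e 3%nat * z ^ 2))%C.
Proof.
  intros Hps He0 Hd.
  destruct (bigO_ps e g 3 Hps) as [d1 [K1 [Hd1 [HK1 H1]]]].
  destruct (deriv_exp e g g' Hps Hd) as [d2 [K2 [Hd2 [HK2 H2]]]].
  exists (Rmin d1 d2), (K1 + K2). split; [apply Rmin_pos; lra|]. split; [lra|].
  intros z Hz. assert (Hz1 : Cmod z < d1) by (eapply Rlt_le_trans; [exact Hz|apply Rmin_l]).
  assert (Hz2 : Cmod z < d2) by (eapply Rlt_le_trans; [exact Hz|apply Rmin_r]).
  destruct (Defs.Ceq_dec z Cx0) as [E|E].
  - (* at 0 the value is [g'(0) = e_1 = dpoly e 0] *)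
    subst z. rewrite divz_0. specialize (H2 _ Hz2). rewrite Cx0_C in *. rewrite Cmod_0 in *.
    replace (e 1%nat + e 2%nat * RtoC 0 + e 3%nat * RtoC 0 ^ 2)%C with (dpoly e (RtoC 0))
      by (unfold dpoly; ring).
    simpl pow in *. lra.
  - (* away from 0, [g z / z - ... = (remainder of order 4) / z] *)
    rewrite divz_nz, Cdiv_C by exact E. rewrite Cx0_C in E.
    replace (g z / z - (e 1%nat + e 2%nat * z + e 3%nat * z ^ 2))%C with
      ((g z - Cpartial e z 3) / z)%C by (rewrite Cpartial_3, He0; field; exact E).
    rewrite Cmod_div by exact E. specialize (H1 _ Hz1).
    assert (0 < Cmod z) by (apply Cmod_gt_0; exact E).
    unfold Rdiv. apply (Rmult_le_reg_r (Cmod z)); [lra|].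
    rewrite Rmult_assoc, Rinv_l, Rmult_1_r by lra.
    pose proof (pow_le (Cmod z) 4 (Cmod_ge_0 z)).
    replace ((K1 + K2) * Cmod z ^ 3 * Cmod z) with ((K1 + K2) * Cmod z ^ 4) by ring.
    nra.
Qed.

Lemma rlam_exp lam (e : nat -> C) (g g' : C -> C) : ps_on_disk e g -> e 0%nat = RtoC 0 ->
  (forall z, Cmod z < 1 -> C_deriv_at g z (g' z)) ->
  bigO 3 (fun z => Rlam_op lam g g' z -
     (e 1%nat + RtoC (1 + lam) * e 2%nat * z + RtoC (1 + 2 * lam) * e 3%nat * z ^ 2))%C.
Proof.
  intros Hps He0 Hd.
  apply (bigO_ext 3 (fun z =>
      RtoC (1 - lam) * (divz g g' z - (e 1%nat + e 2%nat * z + e 3%nat * z ^ 2)) +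
      RtoC lam * (g' z - dpoly e z))%C _ 1); [lra| |].
  - intros z _. change (Rlam_op lam g g' z) with (RtoC (1-lam) * divz g g' z + RtoC lam * g' z)%C.
    unfold dpoly. rewrite RtoC_minus, !RtoC_plus, RtoC_mult. ring.
  - apply bigO_add; apply bigO_scal; [apply divz_exp | apply (deriv_exp e g)]; auto.
Qed.

Lemma comp_exp (Bc c : nat -> C) (phi om : C -> C) : ps_on_disk Bc phi -> ps_on_disk c om ->
  c 0%nat = RtoC 0 -> Bc 0%nat = RtoC 1 ->
  bigO 3 (fun z => phi (om z) - (RtoC 1 + Bc 1%nat * c 1%nat * z +
                   (Bc 1%nat * c 2%nat + Bc 2%nat * c 1%nat ^ 2) * z ^ 2))%C.
Proof.
  intros Hphi Hom Hc0 HB0.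
  pose proof (bigO_ps Bc phi 2 Hphi) as Ep.
  pose proof (bigO_ps c om 2 Hom) as Eo.
  assert (Hm : bigO 2 (fun z => om z - c 1%nat * z)%C).
  { apply (bigO_ext 2 (fun z => (om z - Cpartial c z 2) + c 2%nat * z ^ 2)%C _ 1); [lra| |].
    - intros z _. rewrite Cpartial_2, Hc0. ring.
    - apply bigO_add; [apply (bigO_weak 2 3); auto | apply bigO_scal, bigO_zpow]. }
  assert (Hlin : bigO 1 (fun z => c 1%nat * z)%C).
  { apply (bigO_ext 1 (fun z => c 1%nat * z ^ 1)%C _ 1); [lra|intros; simpl; ring|].
    apply bigO_scal, bigO_zpow. }
  pose proof (ps_bigO1 c om Hom Hc0) as Ho1.
  apply (bigO_ext 3 (fun z => (phi (om z) - Cpartial Bc (om z) 2)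
           + Bc 1%nat * (om z - Cpartial c z 2)
           + Bc 2%nat * ((om z - c 1%nat * z) * (om z + c 1%nat * z)))%C _ 1); [lra| |].
  - intros z _. rewrite !Cpartial_2, Hc0, HB0. cring.
  - apply bigO_add; [apply bigO_add|].
    + exact (bigO_comp 3 (fun w => phi w - Cpartial Bc w 2)%C om Ep Ho1).
    + apply bigO_scal; auto.
    + apply bigO_scal. apply (bigO_mul 2 1); [exact Hm | apply bigO_add; auto].
Qed.

Lemma composition_expansion (a A : nat -> C) (f F : C -> C) :
  ps_on_disk a f -> a 0%nat = RtoC 0 -> a 1%nat = RtoC 1 ->
  ps_on_disk A F -> A 0%nat = RtoC 0 ->
  bigO 4 (fun w => f (F w) - w - (RtoC 0 + (A 1%nat - 1) * w
      + (A 2%nat + a 2%nat * A 1%nat ^ 2) * w ^ 2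
      + (A 3%nat + 2 * a 2%nat * A 1%nat * A 2%nat + a 3%nat * A 1%nat ^ 3) * w ^ 3))%C.
Proof.
  intros Hf Ha0 Ha1 HF HA0.
  set (A1 := A 1%nat). set (A2 := A 2%nat). set (A3 := A 3%nat).
  set (a2 := a 2%nat). set (a3 := a 3%nat).
  set (X := fun w => (A1 * w + A2 * w ^ 2 + A3 * w ^ 3)%C).
  assert (HX : forall w, Cpartial A w 3 = X w)
    by (intros; rewrite Cpartial_3, HA0; unfold X; fold A1 A2 A3; cring).
  assert (HF1 : bigO 1 F) by exact (ps_bigO1 A F HF HA0).
  assert (HF0 : bigO 0 F) by (apply (bigO_weak 0 1); auto).
  assert (HX0 : bigO 0 X) by (unfold X; bounded0).
  set (Y := fun w => (A2 + A3 * w)%C).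
  set (R := fun w => (a2 * (2 * A1 * A3 + Y w ^ 2) +
                      a3 * Y w * ((A1 + w * Y w) ^ 2 + A1 * (A1 + w * Y w) + A1 ^ 2))%C).
  assert (HR : bigO 0 R) by (unfold R, Y; bounded0).
  apply (bigO_ext 4 (fun w => (f (F w) - Cpartial a (F w) 3)
      + (F w - Cpartial A w 3) * (1 + a2 * (F w + X w) + a3 * (F w ^ 2 + F w * X w + X w ^ 2))
      + w ^ 4 * R w)%C _ 1); [lra | |].
  - intros w _. rewrite Cpartial_3, Ha0, Ha1, HX. fold a2 a3. unfold R, Y, X. ring.
  - apply bigO_add; [apply bigO_add|].
    + exact (bigO_comp 4 (fun x => f x - Cpartial a x 3)%C F (bigO_ps a f 3 Hf) HF1).
    + apply (bigO_mul 4 0); [exact (bigO_ps A F 3 HF) | bounded0].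
    + apply (bigO_mul 4 0); [apply bigO_zpow | exact HR].
Qed.

Lemma Csub_eq0 (x y : C) : (x - y)%C = RtoC 0 -> x = y.
Proof. intros H. replace x with ((x - y) + y)%C by ring. rewrite H. ring. Qed.

Lemma inverse_coefs (a A : nat -> C) (f F : C -> C) r0 :
  ps_on_disk a f -> a 0%nat = RtoC 0 -> a 1%nat = RtoC 1 ->
  ps_on_disk A F -> A 0%nat = RtoC 0 -> 0 < r0 ->
  (forall w, Cmod w < r0 -> f (F w) = w) ->
  A 1%nat = RtoC 1 /\ A 2%nat = (- a 2%nat)%C /\ A 3%nat = (2 * a 2%nat ^ 2 - a 3%nat)%C.
Proof.
  intros Hf Ha0 Ha1 HF HA0 Hr0 Hinv.
  pose proof (composition_expansion a A f F Hf Ha0 Ha1 HF HA0) as H.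
  assert (H' : bigO 4 (fun w => RtoC 0 + (A 1%nat - 1) * w
      + (A 2%nat + a 2%nat * A 1%nat ^ 2) * w ^ 2
      + (A 3%nat + 2 * a 2%nat * A 1%nat * A 2%nat + a 3%nat * A 1%nat ^ 3) * w ^ 3)%C).
  { refine (bigO_ext 4 _ _ r0 Hr0 _ (bigO_scal 4 (- 1) _ H)). intros w Hw.
    rewrite (Hinv w Hw). ring. }
  destruct (coef_unique3 _ _ _ _ H') as [_ [E1 [E2 E3]]].
  apply Csub_eq0 in E1.
  assert (EA2 : A 2%nat = (- a 2%nat)%C).
  { replace (A 2%nat) with (A 2%nat + a 2%nat * A 1%nat ^ 2 - a 2%nat * A 1%nat ^ 2)%C by ring.
    rewrite E2, E1. ring. }
  split; [exact E1|]. split; [exact EA2|].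
  replace (A 3%nat) with (A 3%nat + 2 * a 2%nat * A 1%nat * A 2%nat + a 3%nat * A 1%nat ^ 3
                          - (2 * a 2%nat * A 1%nat * A 2%nat + a 3%nat * A 1%nat ^ 3))%C by ring.
  rewrite E3, E1, EA2. ring.
Qed.

Lemma subordination_coefs lam (e c B : nat -> C) (g g' phi om : C -> C) :
  ps_on_disk e g -> e 0%nat = RtoC 0 -> (forall z, Cmod z < 1 -> C_deriv_at g z (g' z)) ->
  ps_on_disk B phi -> B 0%nat = RtoC 1 -> ps_on_disk c om -> c 0%nat = RtoC 0 ->
  (forall z, Cmod z < 1 -> Rlam_op lam g g' z = phi (om z)) ->
  (RtoC (1 + lam) * e 2%nat = B 1%nat * c 1%nat)%C /\
  (RtoC (1 + 2 * lam) * e 3%nat = B 1%nat * c 2%nat + B 2%nat * c 1%nat ^ 2)%C.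
Proof.
  intros He He0 Hd HB HB0 Hc Hc0 Heq.
  pose proof (bigO_sub 3 _ _ (rlam_exp lam e g g' He He0 Hd) (comp_exp B c phi om HB Hc Hc0 HB0))
    as H.
  assert (H' : bigO 3 (fun z => (RtoC 1 - e 1%nat)
      + (B 1%nat * c 1%nat - RtoC (1 + lam) * e 2%nat) * z
      + (B 1%nat * c 2%nat + B 2%nat * c 1%nat ^ 2 - RtoC (1 + 2 * lam) * e 3%nat) * z ^ 2)%C).
  { refine (bigO_ext 3 _ _ 1 ltac:(lra) _ H). intros z Hz. simpl. rewrite (Heq z Hz). ring. }
  destruct (coef_unique2 _ _ _ H') as [_ [E1 E2]]. split.
  - symmetry. exact (Csub_eq0 _ _ E1).
  - symmetry. exact (Csub_eq0 _ _ E2).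
Qed.

(** * Discrete means over roots of unity *)

Fixpoint csum (g : nat -> C) (n : nat) : C :=
  match n with O => RtoC 0 | S n' => (csum g n' + g n')%C end.
Fixpoint rsum (g : nat -> R) (n : nat) : R :=
  match n with O => 0 | S n' => rsum g n' + g n' end.

Lemma csum_ext g h n : (forall k, (k < n)%nat -> g k = h k) -> csum g n = csum h n.
Proof. induction n as [|n IH]; simpl; intros H; [reflexivity|]. rewrite IH, H; auto. Qed.

Lemma csum_plus g h n : csum (fun k => g k + h k)%C n = (csum g n + csum h n)%C.
Proof. induction n as [|n IH]; simpl; [cring|]. rewrite IH. cring. Qed.

Lemma csum_scal (c : C) g n : csum (fun k => c * g k)%C n = (c * csum g n)%C.
Proof. induction n as [|n IH]; simpl; [cring|]. rewrite IH. cring. Qed.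

Lemma csum_const (c : C) n : csum (fun _ => c) n = (RtoC (INR n) * c)%C.
Proof.
  induction n as [|n IH]; [simpl; cring|].
  change (csum (fun _ => c) (S n)) with (csum (fun _ => c) n + c)%C.
  rewrite IH, S_INR, RtoC_plus. cring.
Qed.

Lemma Cconj_R (x : R) : Cconj (RtoC x) = RtoC x.
Proof. unfold Cconj, RtoC; simpl. f_equal. ring. Qed.

Lemma csum_conj g n : Cconj (csum g n) = csum (fun k => Cconj (g k)) n.
Proof. induction n as [|n IH]; simpl; [apply Cconj_R|]. now rewrite Cplus_conj, IH. Qed.

Lemma csum_RtoC h n : csum (fun k => RtoC (h k)) n = RtoC (rsum h n).
Proof. induction n as [|n IH]; simpl; [reflexivity|]. now rewrite IH, RtoC_plus. Qed.

Lemma rsum_le g h n : (forall k, (k < n)%nat -> g k <= h k) -> rsum g n <= rsum h n.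
Proof.
  induction n as [|n IH]; simpl; intros H; [lra|].
  pose proof (H n ltac:(lia)). pose proof (IH ltac:(intros; apply H; lia)). lra.
Qed.

Lemma rsum_ge0 g n : (forall k, (k < n)%nat -> 0 <= g k) -> 0 <= rsum g n.
Proof.
  induction n as [|n IH]; simpl; intros H; [lra|].
  pose proof (H n ltac:(lia)). pose proof (IH ltac:(intros; apply H; lia)). lra.
Qed.

Lemma rsum_scal c g n : rsum (fun k => c * g k) n = c * rsum g n.
Proof. induction n as [|n IH]; simpl; [ring|]. rewrite IH. ring. Qed.

Lemma geom_sum (w : C) n : ((w - 1) * csum (fun k => w ^ k)%C n = w ^ n - 1)%C.
Proof.
  induction n as [|n IH]; [simpl; cring|].
  change (csum (fun k => w ^ k)%C (S n)) with (csum (fun k => w ^ k)%C n + w ^ n)%C.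
  rewrite Cmult_plus_distr_l, IH. simpl. ring.
Qed.

Lemma geom_zero (w : C) n : (w ^ n)%C = RtoC 1 -> w <> RtoC 1 ->
  csum (fun k => w ^ k)%C n = RtoC 0.
Proof.
  intros H1 H2. pose proof (geom_sum w n) as G. rewrite H1 in G.
  assert (Hw : (w - 1)%C <> RtoC 0)
    by (intro HH; apply H2; replace w with ((w - 1) + 1)%C by ring; rewrite HH; ring).
  replace (csum (fun k => w ^ k)%C n)
    with (/ (w - 1) * ((w - 1) * csum (fun k => w ^ k)%C n))%C by (field; exact Hw).
  rewrite G. ring.
Qed.

Definition zeta (m : nat) : C := (cos (2 * PI / INR m), sin (2 * PI / INR m)).

Lemma zeta_pow m k :
  (zeta m ^ k)%C = (cos (INR k * (2 * PI / INR m)), sin (INR k * (2 * PI / INR m))).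
Proof.
  induction k as [|k IH]; [simpl; now rewrite Rmult_0_l, cos_0, sin_0|].
  rewrite Cpow_S, IH, S_INR. unfold zeta, Cmult. simpl.
  replace ((INR k + 1) * (2 * PI / INR m))
    with (2 * PI / INR m + INR k * (2 * PI / INR m)) by ring.
  rewrite cos_plus, sin_plus. f_equal; ring.
Qed.

Lemma Cmod_zeta_pow m k : Cmod (zeta m ^ k)%C = 1.
Proof.
  rewrite zeta_pow. unfold Cmod. cbn [fst snd]. set (x := INR k * (2 * PI / INR m)).
  pose proof (sin2_cos2 x). unfold Rsqr in H.
  replace (cos x ^ 2 + sin x ^ 2) with 1 by (simpl; nra). apply sqrt_1.
Qed.

Lemma zeta_m m : (0 < m)%nat -> (zeta m ^ m)%C = RtoC 1.
Proof.
  intros Hm. rewrite zeta_pow. replace (INR m * (2 * PI / INR m)) with (2 * PI).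
  - now rewrite cos_2PI, sin_2PI.
  - field. apply not_0_INR; lia.
Qed.

Lemma zeta_ne1 m j : (0 < j < m)%nat -> (zeta m ^ j)%C <> RtoC 1.
Proof.
  intros Hj H. rewrite zeta_pow in H. injection H as H1 H2.
  set (x := INR j * (2 * PI / INR m) / 2).
  assert (Hm : 0 < INR m) by (apply lt_0_INR; lia).
  pose proof PI_RGT_0.
  assert (Hx0 : 0 < x).
  { unfold x. apply Rdiv_lt_0_compat; [|lra].
    apply Rmult_lt_0_compat; [apply lt_0_INR; lia | apply Rdiv_lt_0_compat; lra]. }
  assert (HxP : x < PI).
  { unfold x. assert (INR j < INR m) by (apply lt_INR; lia).
    replace (INR j * (2 * PI / INR m) / 2) with (PI * (INR j / INR m)) by (field; lra).
    assert (INR j / INR m < 1).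
    { apply (Rmult_lt_reg_r (INR m)); [exact Hm|]. unfold Rdiv.
      rewrite Rmult_assoc, Rinv_l, Rmult_1_r by lra. lra. }
    nra. }
  pose proof (sin_gt_0 x Hx0 HxP).
  replace (INR j * (2 * PI / INR m)) with (2 * x) in H1 by (unfold x; field; lra).
  rewrite cos_2a_sin in H1. nra.
Qed.

(** On the unit circle, conjugation is inversion. *)
Lemma zeta_conj m e : (0 < m)%nat -> (e <= m)%nat ->
  Cconj (zeta m ^ e)%C = (zeta m ^ (m - e))%C.
Proof.
  intros Hm He. assert (Hnz : (zeta m ^ e)%C <> RtoC 0).
  { intro HH. pose proof (Cmod_zeta_pow m e). rewrite HH, Cmod_0 in H. lra. }
  assert (H1 : (zeta m ^ e * Cconj (zeta m ^ e))%C = RtoC 1).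
  { rewrite <- Cmod2_conj, Cmod_zeta_pow. simpl. f_equal. ring. }
  assert (H2 : (zeta m ^ e * zeta m ^ (m - e))%C = RtoC 1).
  { rewrite <- Cpow_add_r. replace (e + (m - e))%nat with m by lia. apply zeta_m; auto. }
  replace (Cconj (zeta m ^ e))
    with (/ zeta m ^ e * (zeta m ^ e * Cconj (zeta m ^ e)))%C by (field; auto).
  rewrite H1, <- H2. field. auto.
Qed.

Lemma sum_roots m e : (0 < m)%nat -> (0 < e < 2 * m)%nat ->
  csum (fun k => (zeta m ^ e) ^ k)%C m = if Nat.eq_dec e m then RtoC (INR m) else RtoC 0.
Proof.
  intros Hm He. destruct (Nat.eq_dec e m) as [->|Hne].
  - rewrite zeta_m by auto. rewrite (csum_ext _ (fun _ => RtoC 1)).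
    + rewrite csum_const. ring.
    + intros. apply Cpow_1_l.
  - apply geom_zero.
    + rewrite <- Cpow_mult_r, Nat.mul_comm, Cpow_mult_r, zeta_m by auto. apply Cpow_1_l.
    + destruct (Compare_dec.lt_dec e m); [apply zeta_ne1; lia|].
      replace e with (m + (e - m))%nat by lia. rewrite Cpow_add_r, zeta_m by auto.
      rewrite Cmult_1_l. apply zeta_ne1; lia.
Qed.

Lemma dft (b : nat -> C) (r : R) m j D : (0 < j < m)%nat -> (D < m + j)%nat ->
  csum (fun k => Cpartial b (RtoC r * zeta m ^ k) D * (zeta m ^ (m - j)) ^ k)%C m =
  if Compare_dec.le_dec j D then (RtoC (INR m) * b j * RtoC r ^ j)%C else RtoC 0.
Proof.
  intros Hj. induction D as [|D IH]; intros HD.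
  - rewrite (csum_ext _ (fun k => b 0%nat * (zeta m ^ (m - j)) ^ k)%C)
      by (intros; now rewrite Cpartial_0).
    rewrite csum_scal, sum_roots by lia. destruct (Nat.eq_dec (m - j) m); [lia|].
    destruct (Compare_dec.le_dec j 0); [lia|]. ring.
  - rewrite (csum_ext _ (fun k => Cpartial b (RtoC r * zeta m ^ k) D * (zeta m ^ (m - j)) ^ k +
        (b (S D) * RtoC r ^ S D) * (zeta m ^ (S D + (m - j))) ^ k)%C).
    2:{ intros k _. rewrite Cpartial_S, Cpow_add_r, !Cpow_mult_l.
        rewrite <- !Cpow_mult_r, (Nat.mul_comm k (S D)). ring. }
    rewrite csum_plus, csum_scal, IH, sum_roots by lia.
    destruct (Nat.eq_dec (S D + (m - j)) m);
    destruct (Compare_dec.le_dec j D); destruct (Compare_dec.le_dec j (S D)); try lia.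
    + assert (j = S D) by lia. subst. ring.
    + ring.
    + ring.
Qed.

(** * The coefficient inequality [|c_2| <= 1 - |c_1|^2] for Schwarz functions *)

Lemma expand9 (v u ub w wb : nat -> C) (al be : C) n :
  csum (fun k => (v k - al * u k - be * w k) *
                 (Cconj (v k) - Cconj al * ub k - Cconj be * wb k))%C n =
  (csum (fun k => v k * Cconj (v k)) n - Cconj al * csum (fun k => v k * ub k) n
   - al * csum (fun k => Cconj (v k) * u k) n - Cconj be * csum (fun k => v k * wb k) n
   - be * csum (fun k => Cconj (v k) * w k) n + al * Cconj al * csum (fun k => u k * ub k) n
   + be * Cconj be * csum (fun k => w k * wb k) n + al * Cconj be * csum (fun k => u k * wb k) n
   + be * Cconj al * csum (fun k => w k * ub k) n)%C.
Proof. induction n as [|n IH]; [simpl; ring|]. cbn [csum]. rewrite IH. ring. Qed.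

Lemma bessel (v u w : nat -> C) (al be : C) m :
  (forall k, Cmod (u k) = 1) -> (forall k, Cmod (w k) = 1) ->
  csum (fun k => u k * Cconj (w k))%C m = RtoC 0 ->
  csum (fun k => v k * Cconj (u k))%C m = (RtoC (INR m) * al)%C ->
  csum (fun k => v k * Cconj (w k))%C m = (RtoC (INR m) * be)%C ->
  INR m * (Cmod al ^ 2 + Cmod be ^ 2) <= rsum (fun k => Cmod (v k) ^ 2) m.
Proof.
  intros Hu Hw Huw Hv1 Hv2.
  assert (Hunit : forall x, Cmod x = 1 -> (x * Cconj x)%C = RtoC 1)
    by (intros x Hx; rewrite <- Cmod2_conj, Hx; f_equal; ring).
  assert (Hswap : forall x y, (Cconj x * y)%C = Cconj (x * Cconj y))
    by (intros; rewrite Cmult_conj, Cconj_conj; ring).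
  (* [sum |v_k - al u_k - be w_k|^2 = sum |v_k|^2 - m (|al|^2 + |be|^2)] *)
  set (d := fun k => (v k - al * u k - be * w k)%C).
  assert (H0 : 0 <= rsum (fun k => Cmod (d k) ^ 2) m)
    by (apply rsum_ge0; intros; apply pow2_ge_0).
  assert (E : RtoC (rsum (fun k => Cmod (d k) ^ 2) m) =
              RtoC (rsum (fun k => Cmod (v k) ^ 2) m - INR m * (Cmod al ^ 2 + Cmod be ^ 2))).
  { rewrite <- csum_RtoC. rewrite (csum_ext _ (fun k => (v k - al * u k - be * w k) *
          (Cconj (v k) - Cconj al * Cconj (u k) - Cconj be * Cconj (w k)))%C).
    2:{ intros k _. rewrite Cmod2_conj. unfold d. now rewrite !Cminus_conj, !Cmult_conj. }
    rewrite expand9.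
    rewrite (csum_ext (fun k => u k * Cconj (u k))%C (fun _ => RtoC 1)) by auto.
    rewrite (csum_ext (fun k => w k * Cconj (w k))%C (fun _ => RtoC 1)) by auto.
    rewrite (csum_ext (fun k => Cconj (v k) * u k)%C (fun k => Cconj (v k * Cconj (u k)))%C)
      by auto.
    rewrite (csum_ext (fun k => Cconj (v k) * w k)%C (fun k => Cconj (v k * Cconj (w k)))%C)
      by auto.
    rewrite (csum_ext (fun k => w k * Cconj (u k))%C (fun k => Cconj (u k * Cconj (w k)))%C)
      by (intros; rewrite Cmult_conj, Cconj_conj; ring).
    rewrite !csum_const, <- !csum_conj, Huw, Hv1, Hv2, !Cmult_conj, !Cconj_R.
    rewrite RtoC_minus, RtoC_mult, RtoC_plus, !Cmod2_conj, <- csum_RtoC.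
    rewrite (csum_ext (fun k => RtoC (Cmod (v k) ^ 2)) (fun k => v k * Cconj (v k))%C)
      by (intros; apply Cmod2_conj).
    ring. }
  apply RtoC_inj in E. lra.
Qed.

Lemma circ_mean (u : nat -> C) (p : C) m : (forall k, Cmod (u k) = 1) -> csum u m = RtoC 0 ->
  rsum (fun k => Cmod (1 + p * u k)%C ^ 2) m = INR m * (1 + Cmod p ^ 2).
Proof.
  intros Hu Hs. apply RtoC_inj. rewrite <- csum_RtoC.
  rewrite (csum_ext _ (fun k => (1 + p * u k) * (1 + Cconj p * Cconj (u k)))%C)
    by (intros; now rewrite Cmod2_conj, Cplus_conj, Cmult_conj, Cconj_R).
  assert (Hexp : forall n, csum (fun k => (1 + p * u k) * (1 + Cconj p * Cconj (u k)))%C n =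
    (RtoC (INR n) + p * csum u n + Cconj p * csum (fun k => Cconj (u k)) n
     + p * Cconj p * csum (fun k => u k * Cconj (u k)) n)%C).
  { induction n as [|n IH]; [simpl; ring|]. cbn [csum]. rewrite IH, S_INR, RtoC_plus. ring. }
  rewrite Hexp, <- csum_conj, Hs.
  rewrite (csum_ext (fun k => u k * Cconj (u k))%C (fun _ => RtoC 1))
    by (intros; rewrite <- Cmod2_conj, Hu; f_equal; ring).
  rewrite csum_const, RtoC_mult, RtoC_plus, Cmod2_conj, Cconj_R. ring.
Qed.

Lemma partial_sums_near_bound (c : nat -> C) (om : C -> C) r eps :
  ps_on_disk c om -> (forall z, Cmod z < 1 -> Cmod (om z) < 1) -> 0 < r < 1 -> 0 < eps ->
  exists N0, forall N z, (N0 <= N)%nat -> Cmod z <= r -> Cmod (Cpartial c z N) <= 1 + eps.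
Proof.
  intros Hps Hom Hr Heps.
  set (s := (1 + r) / 2). set (q := r / s).
  destruct (coef_bound c om s Hps ltac:(unfold s; lra)) as [M [HM0 HM]].
  assert (Hq : 0 <= q < 1).
  { unfold q, s. split; [apply Rle_mult_inv_pos; lra|].
    apply (Rmult_lt_reg_r ((1 + r) / 2)); [lra|].
    unfold Rdiv. rewrite Rmult_assoc, Rinv_l by lra. lra. }
  destruct (pow_lt_1_zero q ltac:(rewrite Rabs_right; lra) (eps * (1 - q) / (M + 1)))
    as [N0 HN0]; [apply Rdiv_lt_0_compat; [apply Rmult_lt_0_compat|]; lra|].
  exists N0. intros N z HN Hz.
  assert (Htail : M * q ^ S N * / (1 - q) <= eps).
  { specialize (HN0 (S N) ltac:(lia)).
    rewrite Rabs_right in HN0 by (apply Rle_ge, pow_le; lra).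
    apply (Rmult_le_reg_r (1 - q)); [lra|]. rewrite Rmult_assoc, Rinv_l, Rmult_1_r by lra.
    apply (Rmult_lt_compat_r (M + 1)) in HN0; [|lra].
    replace (eps * (1 - q) / (M + 1) * (M + 1)) with (eps * (1 - q)) in HN0 by (field; lra).
    pose proof (pow_le q (S N) ltac:(lra)). nra. }
  assert (Hz1 : Cmod z < 1) by lra.
  pose proof (tail_bound c om z s q M N Hps Hz1 ltac:(unfold s; lra) Hq
                ltac:(unfold q, s; replace (r / ((1 + r) / 2) * ((1 + r) / 2)) with r
                        by (field; lra); exact Hz) HM HM0).
  pose proof (Hom z Hz1).
  replace (Cpartial c z N) with (om z - (om z - Cpartial c z N))%C by ring.
  eapply Rle_trans; [apply Cmod_triangle|]. rewrite Cmod_opp. lra.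
Qed.

Definition shift (c : nat -> C) (n : nat) : C := match n with O => RtoC 0 | S n' => c n' end.

Lemma shift_partial (c : nat -> C) (z : C) N :
  Cpartial (shift c) z (S N) = (z * Cpartial c z N)%C.
Proof. rewrite Cpartial_unshift. change (fun k => shift c (S k)) with c. simpl shift. cring. Qed.

Lemma fourier_coef (c : nat -> C) (p : C) (r : R) N m j :
  (0 < j <= N)%nat -> (S N < m)%nat ->
  csum (fun k => Cpartial c (RtoC r * zeta m ^ k) N * (1 + p * (RtoC r * zeta m ^ k))
                 * Cconj ((zeta m ^ j) ^ k))%C m =
  (RtoC (INR m) * (c j + p * shift c j) * RtoC r ^ j)%C.
Proof.
  intros Hj Hm.
  rewrite (csum_ext _ (fun k => Cpartial c (RtoC r * zeta m ^ k) N * (zeta m ^ (m - j)) ^ k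
        + p * (Cpartial (shift c) (RtoC r * zeta m ^ k) (S N) * (zeta m ^ (m - j)) ^ k))%C).
  2:{ intros k _. rewrite shift_partial, Cpow_conj, zeta_conj by lia. ring. }
  rewrite csum_plus, csum_scal, !dft by lia.
  destruct (Compare_dec.le_dec j N); [|lia].
  destruct (Compare_dec.le_dec j (S N)); [|lia]. ring.
Qed.

Lemma circle_lower_bound (c : nat -> C) (p : C) (r : R) N m :
  c 0%nat = RtoC 0 -> (2 <= N)%nat -> (S N < m)%nat ->
  INR m * (Cmod (c 1%nat * RtoC r)%C ^ 2 + Cmod ((c 2%nat + p * c 1%nat) * RtoC r ^ 2)%C ^ 2)
  <= rsum (fun k => Cmod (Cpartial c (RtoC r * zeta m ^ k)%C N
                          * (1 + p * (RtoC r * zeta m ^ k)))%C ^ 2) m.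
Proof.
  intros Hc0 HN Hm.
  apply (bessel _ (fun k => (zeta m ^ 1) ^ k)%C (fun k => (zeta m ^ 2) ^ k)%C).
  - intros; rewrite Cmod_pow, Cmod_zeta_pow, pow1; reflexivity.
  - intros; rewrite Cmod_pow, Cmod_zeta_pow, pow1; reflexivity.
  -
    rewrite (csum_ext _ (fun k => (zeta m ^ (m - 1)) ^ k)%C).
    + rewrite sum_roots by lia. destruct (Nat.eq_dec (m - 1) m); [lia | reflexivity].
    + intros k _. rewrite Cpow_conj, zeta_conj by lia.
      rewrite <- Cpow_mult_l, <- Cpow_add_r.
      now replace (1 + (m - 2))%nat with (m - 1)%nat by lia.
  - rewrite (fourier_coef c p r N m 1) by lia. simpl shift. rewrite Hc0. simpl. ring.
  - rewrite (fourier_coef c p r N m 2) by lia. simpl shift. ring.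
Qed.

(** Upper bound: if [|P_N| <= 1 + eps] on the sample points, the mean of [|v|^2]
    is at most [(1+eps)^2 (1 + |p r|^2)], the mean of [|1 + p z|^2] being exact. *)
Lemma circle_upper_bound (c : nat -> C) (p : C) (r eps : R) N m :
  (1 < m)%nat -> 0 <= 1 + eps ->
  (forall k, Cmod (Cpartial c (RtoC r * zeta m ^ k)%C N) <= 1 + eps) ->
  rsum (fun k => Cmod (Cpartial c (RtoC r * zeta m ^ k)%C N
                       * (1 + p * (RtoC r * zeta m ^ k)))%C ^ 2) m
  <= (1 + eps) ^ 2 * (INR m * (1 + Cmod (p * RtoC r)%C ^ 2)).
Proof.
  intros Hm Heps HP.
  rewrite <- (circ_mean (fun k => zeta m ^ k)%C (p * RtoC r)%C m).
  2:{ intros; apply Cmod_zeta_pow. }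
  2:{ rewrite (csum_ext _ (fun k => (zeta m ^ 1) ^ k)%C) by (intros; now rewrite Cpow_1_r).
      rewrite sum_roots by lia. destruct (Nat.eq_dec 1 m); [lia | reflexivity]. }
  rewrite <- rsum_scal. apply rsum_le. intros k _.
  rewrite Cmod_mult, Rpow_mult_distr.
  replace (1 + p * RtoC r * zeta m ^ k)%C with (1 + p * (RtoC r * zeta m ^ k))%C by ring.
  apply Rmult_le_compat_r; [apply pow2_ge_0|].
  apply pow_incr. split; [apply Cmod_ge_0 | apply HP].
Qed.

Lemma schwarz_approx (c : nat -> C) (om : C -> C) : ps_on_disk c om -> c 0%nat = RtoC 0 ->
  (forall z, Cmod z < 1 -> Cmod (om z) < 1) -> forall (p : C) r eps, 0 < r < 1 -> 0 < eps ->
  Cmod (c 1%nat) ^ 2 * r ^ 2 + Cmod (c 2%nat + p * c 1%nat)%C ^ 2 * r ^ 4 <=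
  (1 + eps) ^ 2 * (1 + Cmod p ^ 2 * r ^ 2).
Proof.
  intros Hps Hc0 Hom p r eps Hr Heps.
  destruct (partial_sums_near_bound c om r eps Hps Hom Hr Heps) as [N0 HN0].
  set (N := (N0 + 2)%nat). set (m := (N + 3)%nat).
  assert (HmR : 0 < INR m) by (apply lt_0_INR; unfold m; lia).
  pose proof (circle_lower_bound c p r N m Hc0 ltac:(unfold N; lia) ltac:(unfold m; lia))
    as Hlow.
  pose proof (circle_upper_bound c p r eps N m ltac:(unfold m; lia) ltac:(lra)) as Hup.
  specialize (Hup ltac:(intros k; apply HN0; [unfold N; lia|];
                        rewrite Cmod_mult, Cmod_zeta_pow, Cmod_R, Rabs_right; lra)).
  rewrite !Cmod_mult, Cmod_pow, Cmod_R, Rabs_right in Hlow by lra.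
  rewrite !Cmod_mult, Cmod_R, Rabs_right in Hup by lra.
  apply (Rmult_le_reg_l (INR m)); [exact HmR|].
  replace (INR m * (Cmod (c 1%nat) ^ 2 * r ^ 2 + Cmod (c 2%nat + p * c 1%nat)%C ^ 2 * r ^ 4))
    with (INR m * ((Cmod (c 1%nat) * r) ^ 2 + (Cmod (c 2%nat + p * c 1%nat)%C * r ^ 2) ^ 2))
    by ring.
  replace (INR m * ((1 + eps) ^ 2 * (1 + Cmod p ^ 2 * r ^ 2)))
    with ((1 + eps) ^ 2 * (INR m * (1 + (Cmod p * r) ^ 2))) by ring.
  lra.
Qed.

Lemma lim_eps X Y : 0 <= Y -> (forall eps, 0 < eps -> X <= (1 + eps) ^ 2 * Y) -> X <= Y.
Proof.
  intros HY H. apply le_epsilon. intros e He.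
  set (eps := Rmin 1 (e / (3 * Y + 1))).
  assert (H1 : 0 < eps) by (unfold eps; apply Rmin_pos; [lra|apply Rdiv_lt_0_compat; lra]).
  assert (H2 : eps <= 1) by (unfold eps; apply Rmin_l).
  assert (H3 : eps * (3 * Y + 1) <= e).
  { assert (eps <= e / (3 * Y + 1)) by (unfold eps; apply Rmin_r).
    apply (Rmult_le_compat_r (3 * Y + 1)) in H0; [|lra].
    replace (e / (3 * Y + 1) * (3 * Y + 1)) with e in H0 by (field; lra). lra. }
  specialize (H eps H1). nra.
Qed.

Lemma lim_r X Y Z : 0 <= X -> 0 <= Y ->
  (forall r, 0 < r < 1 -> X * r ^ 2 + Y * r ^ 4 <= 1 + Z * r ^ 2) -> X + Y <= 1 + Z.
Proof.
  intros HX HY H. apply le_epsilon. intros e He.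
  assert (Hpos : 0 < X + Y + Rabs Z + 1) by (pose proof (Rabs_pos Z); lra).
  set (de := Rmin (1/2) (e / (4 * (X + Y + Rabs Z + 1)))).
  assert (H1 : 0 < de) by (unfold de; apply Rmin_pos; [lra|apply Rdiv_lt_0_compat; lra]).
  assert (H2 : de <= 1/2) by (unfold de; apply Rmin_l).
  assert (H3 : de * (4 * (X + Y + Rabs Z + 1)) <= e).
  { assert (de <= e / (4 * (X + Y + Rabs Z + 1))) by (unfold de; apply Rmin_r).
    apply (Rmult_le_compat_r (4 * (X + Y + Rabs Z + 1))) in H0; [|lra].
    replace (e / (4 * (X + Y + Rabs Z + 1)) * (4 * (X + Y + Rabs Z + 1))) with e in H0
      by (field; lra).
    lra. }
  set (r := 1 - de). specialize (H r ltac:(unfold r; lra)).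
  assert (Hr4 : 0 <= 1 - r ^ 4 <= 4 * de) by (unfold r; simpl; split; nra).
  assert (Hr2 : 0 <= 1 - r ^ 2 <= 4 * de) by (unfold r; simpl; split; nra).
  assert (Z * r ^ 2 <= Z + Rabs Z * (1 - r ^ 2)).
  { pose proof (Rle_abs Z). pose proof (Rle_abs (- Z)). rewrite Rabs_Ropp in H4. nra. }
  assert (X * (1 - r ^ 2) <= X * (4 * de)) by nra.
  assert (Y * (1 - r ^ 4) <= Y * (4 * de)) by nra.
  assert (Rabs Z * (1 - r ^ 2) <= Rabs Z * (4 * de)) by (pose proof (Rabs_pos Z); nra).
  nra.
Qed.

(** Optimising over the real parameter [t] in
    [u^2 + v^2 (1 + t u^2)^2 <= 1 + t^2 v^2 u^2] gives [v <= 1 - u^2]. *)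
Lemma optimize_t u v : 0 <= u -> 0 <= v ->
  (forall t, 0 <= t -> u ^ 2 + (v * (1 + t * u ^ 2)) ^ 2 <= 1 + (t * v * u) ^ 2) ->
  v <= 1 - u ^ 2.
Proof.
  intros Hu Hv H. pose proof (H 0 ltac:(lra)) as H0.
  replace (1 + 0 * u ^ 2) with 1 in H0 by ring.
  replace ((0 * v * u) ^ 2) with 0 in H0 by ring.
  set (w := u ^ 2) in *.
  assert (Hw : 0 <= w) by (unfold w; apply pow2_ge_0).
  destruct (Req_dec w 1) as [E|E]; [rewrite E; nra|].
  assert (Hw1 : w < 1) by nra.
  set (t := / (1 - w)). assert (Ht : 0 < t) by (unfold t; apply Rinv_0_lt_compat; lra).
  assert (Ht1 : t * (1 - w) = 1) by (unfold t; field; lra).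
  specialize (H t ltac:(lra)). fold w in H.
  replace (1 + t * w) with t in H by (unfold t; field; lra).
  replace ((t * v * u) ^ 2) with (t ^ 2 * v ^ 2 * w) in H by (unfold w; ring).
  assert (v ^ 2 * t ^ 2 * (1 - w) <= 1 - w) by nra.
  assert (v ^ 2 * t ^ 2 <= 1) by (apply (Rmult_le_reg_r (1 - w)); lra).
  assert (v * t <= 1) by nra.
  assert (v = v * t * (1 - w)) by (rewrite Rmult_assoc, Ht1; ring).
  nra.
Qed.

Lemma schwarz_coef_bound (c : nat -> C) (om : C -> C) :
  ps_on_disk c om -> c 0%nat = RtoC 0 ->
  (forall z, Cmod z < 1 -> Cmod (om z) < 1) -> Cmod (c 2%nat) <= 1 - Cmod (c 1%nat) ^ 2.
Proof.
  intros Hps Hc0 Hom.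
  assert (Hall : forall p : C,
    Cmod (c 1%nat) ^ 2 + Cmod (c 2%nat + p * c 1%nat)%C ^ 2 <= 1 + Cmod p ^ 2).
  { intros p. apply lim_r; try apply pow2_ge_0. intros r Hr.
    apply lim_eps; [pose proof (pow2_ge_0 (Cmod p)); pose proof (pow2_ge_0 r); nra|].
    intros eps Heps. exact (schwarz_approx c om Hps Hc0 Hom p r eps Hr Heps). }
  apply optimize_t; try apply Cmod_ge_0. intros t Ht.
  (* the choice [p = t c_2 conj(c_1)] *)
  specialize (Hall (RtoC t * c 2%nat * Cconj (c 1%nat))%C).
  replace (c 2%nat + RtoC t * c 2%nat * Cconj (c 1%nat) * c 1%nat)%C with
    (c 2%nat * (1 + RtoC t * (c 1%nat * Cconj (c 1%nat))))%C in Hall by ring.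
  rewrite <- Cmod2_conj, <- RtoC_mult, <- RtoC_plus in Hall.
  rewrite !Cmod_mult, Cmod_conj, !Cmod_R, (Rabs_right t) in Hall by lra.
  rewrite (Rabs_right (1 + t * Cmod (c 1%nat) ^ 2)) in Hall
    by (pose proof (pow2_ge_0 (Cmod (c 1%nat))); nra).
  exact Hall.
Qed.

Lemma C_real (z : C) : snd z = 0 -> z = RtoC (fst z).
Proof. destruct z as [x y]. simpl. intros ->. reflexivity. Qed.

Lemma inverse_series (a : nat -> C) (f F : C -> C) : bi_univalent_with_inverse a f F ->
  exists A, ps_on_disk A F /\ A 0%nat = RtoC 0 /\
            A 2%nat = (- a 2%nat)%C /\ A 3%nat = (2 * a 2%nat ^ 2 - a 3%nat)%C.
Proof.
  intros [[Hfa [Ha0 Ha1]] [[_ Hfinj] [[[A HFA] _] [r0 [Hr0 Hinv]]]]].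
  rewrite Cx0_C in Ha0. rewrite Cx1_C in Ha1.
  assert (Hz0 : Defs.Cmod (RtoC 0) < 1) by (rewrite Cmod_C, Cmod_0; lra).
  (* [F 0 = 0] since [f (F 0) = 0 = f 0] and [f] is injective *)
  assert (HF0 : F (RtoC 0) = RtoC 0).
  { destruct (Hinv (RtoC 0) ltac:(rewrite Cmod_C, Cmod_0; lra)) as [H1 H2].
    apply Hfinj; [exact H1 | exact Hz0|]. now rewrite H2, (ps_at0 a f Hfa), Ha0. }
  assert (HA0 : A 0%nat = RtoC 0) by (rewrite <- (ps_at0 A F HFA); exact HF0).
  destruct (inverse_coefs a A f F r0 Hfa Ha0 Ha1 HFA HA0 Hr0) as [_ [HA2 HA3]].
  { intros w Hw. apply (Hinv w). now rewrite Cmod_C. }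
  exists A. auto.
Qed.

Lemma subordination_data lam (e B : nat -> C) (g g' phi : C -> C) :
  ps_on_disk e g -> e 0%nat = RtoC 0 -> (forall z, Cmod z < 1 -> C_deriv_at g z (g' z)) ->
  ps_on_disk B phi -> B 0%nat = RtoC 1 -> subordinate (Rlam_op lam g g') phi ->
  exists c : nat -> C, Cmod (c 2%nat) <= 1 - Cmod (c 1%nat) ^ 2 /\
    (RtoC (1 + lam) * e 2%nat = B 1%nat * c 1%nat)%C /\
    (RtoC (1 + 2 * lam) * e 3%nat = B 1%nat * c 2%nat + B 2%nat * c 1%nat ^ 2)%C.
Proof.
  intros He He0 Hd HB HB0 [om [[c Hc] [Hom0 [Hom1 Heq]]]].
  rewrite Cx0_C in Hom0.
  assert (Hc0 : c 0%nat = RtoC 0) by (rewrite <- (ps_at0 c om Hc); exact Hom0).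
  exists c. split.
  - exact (schwarz_coef_bound c om Hc Hc0 Hom1).
  - apply (subordination_coefs lam e c B g g' phi om); auto.
Qed.

Lemma coef_identity (lam b1 b2 : R) (a2 a3 c1 c2 d1 d2 : C) : b1 <> 0 ->
  (RtoC (1 + lam) * a2 = RtoC b1 * c1)%C ->
  (RtoC (1 + 2 * lam) * a3 = RtoC b1 * c2 + RtoC b2 * c1 ^ 2)%C ->
  (RtoC (1 + lam) * (- a2) = RtoC b1 * d1)%C ->
  (RtoC (1 + 2 * lam) * (2 * a2 ^ 2 - a3) = RtoC b1 * d2 + RtoC b2 * d1 ^ 2)%C ->
  d1 = (- c1)%C /\
  (RtoC (2 * (1 + 2 * lam)) * a2 ^ 2 = RtoC b1 * (c2 + d2) + RtoC (2 * b2) * c1 ^ 2)%C.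
Proof.
  intros Hb1 Q1 Q2 Q3 Q4.
  assert (Hb1C : RtoC b1 <> RtoC 0) by (intro HH; injection HH; lra).
  assert (Ed1 : d1 = (- c1)%C).
  { replace d1 with (/ RtoC b1 * (RtoC b1 * d1))%C by (field; exact Hb1C).
    rewrite <- Q3. replace (RtoC (1 + lam) * - a2)%C with (- (RtoC (1 + lam) * a2))%C by ring.
    rewrite Q1. field. exact Hb1C. }
  split; [exact Ed1|]. rewrite Ed1 in Q4. rewrite !RtoC_mult.
  replace (RtoC 2 * RtoC (1 + 2 * lam) * a2 ^ 2)%C
    with (RtoC (1 + 2 * lam) * a3 + RtoC (1 + 2 * lam) * (2 * a2 ^ 2 - a3))%C by ring.
  rewrite Q2, Q4. ring.
Qed.

Lemma a2_modulus_bound (lam b1 b2 : R) (a2 c1 c2 d2 : C) : 0 <= lam -> 0 < b1 ->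
  (RtoC (2 * (1 + 2 * lam)) * a2 ^ 2 = RtoC b1 * (c2 + d2) + RtoC (2 * b2) * c1 ^ 2)%C ->
  2 * (1 + 2 * lam) * Cmod a2 ^ 2
  <= b1 * (Cmod c2 + Cmod d2) + 2 * Rabs b2 * Cmod c1 ^ 2.
Proof.
  intros Hlam Hb1 Key. apply (f_equal Cmod) in Key.
  rewrite Cmod_mult, Cmod_pow, Cmod_R, Rabs_right in Key by lra.
  rewrite Key. eapply Rle_trans; [apply Cmod_triangle|].
  rewrite !Cmod_mult, !Cmod_R, Cmod_pow, Rabs_mult, (Rabs_right b1), (Rabs_right 2) by lra.
  apply Rplus_le_compat_r, Rmult_le_compat_l; [lra | apply Cmod_triangle].
Qed.

Lemma final_estimate lam b1 b2 x u s1 s2 : 0 <= lam -> 0 < b1 -> 0 <= x ->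
  0 <= s1 -> s1 <= 1 - u ^ 2 -> s2 <= 1 - u ^ 2 ->
  2 * (1 + 2 * lam) * x ^ 2 <= b1 * (s1 + s2) + 2 * Rabs b2 * u ^ 2 ->
  x <= sqrt ((b1 + Rabs (b1 - b2)) / (1 + 2 * lam)).
Proof.
  intros Hlam Hb1 Hx Hs1p Hs1 Hs2 H.
  (* [(1+2lam) x^2 <= b1 + (|b2| - b1) u^2 <= b1 + |b1 - b2|] *)
  assert (Hb2 : Rabs b2 - b1 <= Rabs (b1 - b2)).
  { pose proof (Rabs_triang (b2 - b1) b1). replace (b2 - b1 + b1) with b2 in H0 by ring.
    rewrite Rabs_minus_sym, (Rabs_right b1) in H0 by lra. lra. }
  assert (Hfin : (1 + 2 * lam) * x ^ 2 <= b1 + Rabs (b1 - b2)).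
  { pose proof (Rabs_pos (b1 - b2)). pose proof (pow2_ge_0 u).
    destruct (Rle_dec (Rabs b2 - b1) 0); nra. }
  rewrite <- (sqrt_pow2 x Hx). apply sqrt_le_1_alt.
  apply (Rmult_le_reg_l (1 + 2 * lam)); [lra|].
  replace ((1 + 2 * lam) * ((b1 + Rabs (b1 - b2)) / (1 + 2 * lam))) with (b1 + Rabs (b1 - b2))
    by (field; lra).
  exact Hfin.
Qed.

Theorem theorem1 (lam : R) (Hlam : 0 <= lam)
  (phi : Cx -> Cx) (B : nat -> Cx)
  (Hphi : ps_on_disk B phi) (HB0 : B O = Cx1)
  (HB1 : snd (B 1%nat) = 0 /\ fst (B 1%nat) > 0) (HB2 : snd (B 2%nat) = 0)
  (a : nat -> Cx) (f F f' F' : Cx -> Cx)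
  (Hsig : bi_univalent_with_inverse a f F)
  (Hf' : forall z, Cmod z < 1 -> C_deriv_at f z (f' z))
  (HF' : forall w, Cmod w < 1 -> C_deriv_at F w (F' w))
  (Hsubf : subordinate (Rlam_op lam f f') phi)
  (HsubF : subordinate (Rlam_op lam F F') phi) :
  Cmod (a 2%nat) <=
  sqrt ((fst (B 1%nat) + Rabs (fst (B 1%nat) - fst (B 2%nat))) / (1 + 2 * lam)).
Proof.
  destruct (inverse_series a f F Hsig) as [A [HFA [HA0 [HA2 HA3]]]].
  destruct Hsig as [[Hfa [Ha0 _]] _]. rewrite Cx0_C in Ha0. rewrite Cx1_C in HB0.
  destruct (subordination_data lam a B f f' phi Hfa Ha0 Hf' Hphi HB0 Hsubf)
    as [c [Sc [Q1 Q2]]].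
  destruct (subordination_data lam A B F F' phi HFA HA0 HF' Hphi HB0 HsubF)
    as [d [Sd [Q3 Q4]]].
  rewrite HA2 in Q3. rewrite HA3 in Q4.
  destruct HB1 as [HB1s HB1p].
  rewrite (C_real _ HB1s) in Q1, Q2, Q3, Q4. rewrite (C_real _ HB2) in Q2, Q4.
  destruct (coef_identity lam (fst (B 1%nat)) (fst (B 2%nat)) _ _ _ _ _ _ ltac:(lra)
              Q1 Q2 Q3 Q4) as [Ed1 Key].
  rewrite Ed1, Cmod_opp in Sd.
  apply final_estimate with (u := Cmod (c 1%nat)) (s1 := Cmod (c 2%nat)) (s2 := Cmod (d 2%nat));
    auto using Cmod_ge_0.
  exact (a2_modulus_bound lam _ _ _ _ _ _ Hlam HB1p Key).
Qed.
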